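(* Let $(X,\mu)$ be a discrete-time BRW and $A\subseteq X$ nonempty. The following are equivalent: (1) $q(x,A)=\bar q(x)$ for all $x\in X$; (2) $q_0(x,A)\le\bar q(x)$ for all $x\in X$; (3) for every $x\in X$, either $\bar q(x)=1$ or, conditioned on global survival starting from one particle at $x$, local survival in $A$ occurs with probability $1$.
   Context: $S_X:=\{f:X\to\mathbb N:\sum_yf(y)<\infty\}$; a discrete-time BRW $(X,\mu)$: probability measures $\mu_x$ on $S_X$, each particle at $x$ independently replaced by $f(y)$ particles at each $y$, $f\sim\mu_x$; $\eta_n(y)$ is the number of particles at $y$ in generation $n$. For $n\ge0$, $q_n(x,A)$ is the probability, starting with one particle at $x$, that $\eta_k(y)=0$ for all $k\ge n+1$ and all $y\in A$; $q(x,A):=\lim_nq_n(x,A)$ is the probability of local extinction in $A$, $\bar q(x):=q(x,X)$. Local survival in $A$ is the complement of local extinction in $A$; global survival is the event that particles exist at every generation. *)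

From Stdlib Require Import Reals ClassicalEpsilon List.
Set Implicit Arguments.
Open Scope R_scope.

Definition ind (P : Prop) : R := if excluded_middle_informative P then 1 else 0.

Fixpoint lsum {T : Type} (f : T -> R) (l : list T) : R :=
  match l with nil => 0 | t :: l' => f t + lsum f l' end.

Definition psums {T : Type} (f : T -> R) (r : R) : Prop :=
  exists l : list T, NoDup l /\ r = lsum f l.

Lemma psums_ne {T : Type} (f : T -> R) : exists r, psums f r.
Proof. exists 0, nil. split; [constructor | reflexivity]. Qed.

(** Sum over the whole type [T] of a (nonnegative) function: the supremum of the
    finite partial sums (set to 0 if unbounded; only used on bounded sums). *)
Definition sumR {T : Type} (f : T -> R) : R :=
  match excluded_middle_informative (bound (psums f)) with
  | left Hb => proj1_sig (completeness (psums f) Hb (psums_ne f))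
  | right _ => 0
  end.

(** Elements of S_X are functions X -> nat with finite support. *)
Definition fin_supp {X : Type} (f : X -> nat) : Prop :=
  exists l : list X, forall y, f y <> 0%nat -> In y l.

Fixpoint cfg {X : Type} (l : list X) : X -> nat :=
  match l with
  | nil => fun _ => 0%nat
  | x :: l' => fun y => ((if excluded_middle_informative (x = y) then 1 else 0) + cfg l' y)%nat
  end.

(** Convolution (law of the sum of two independent S_X-valued variables). *)
Definition conv {X : Type} (m1 m2 : (X -> nat) -> R) (h : X -> nat) : R :=
  sumR (fun p : (X -> nat) * (X -> nat) =>
          ind (forall y, (fst p y + snd p y)%nat = h y) * (m1 (fst p) * m2 (snd p))).

(** Law of the offspring configuration of the particles listed in [l]
    (each particle at x reproduces independently according to mu x). *)
Fixpoint offl {X : Type} (mu : X -> (X -> nat) -> R) (l : list X) : (X -> nat) -> R :=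
  match l with
  | nil => fun h => ind (forall y, h y = 0%nat)
  | x :: l' => conv (mu x) (offl mu l')
  end.

Definition is_BRW {X : Type} (mu : X -> (X -> nat) -> R) : Prop :=
  forall x, (forall f, 0 <= mu x f) /\ (forall f, mu x f <> 0 -> fin_supp f)
            /\ sumR (mu x) = 1.

(** A realization, on some probability space, of the BRW (X,mu) started with one
    particle at x: eta n w y = number of particles at y in generation n. *)
Record BRW_realization {X : Type} (mu : X -> (X -> nat) -> R) (x : X) : Type := {
  rOm : Type;
  rF : (rOm -> Prop) -> Prop;
  rP : (rOm -> Prop) -> R;
  reta : nat -> rOm -> X -> nat;
  F_full : rF (fun _ => True);
  F_compl : forall E, rF E -> rF (fun w => ~ E w);
  F_union : forall E : nat -> rOm -> Prop, (forall n, rF (E n)) -> rF (fun w => exists n, E n w);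
  P_nonneg : forall E, rF E -> 0 <= rP E;
  P_full : rP (fun _ => True) = 1;
  P_sigma : forall E : nat -> rOm -> Prop, (forall n, rF (E n)) ->
      (forall n m w, n <> m -> E n w -> E m w -> False) ->
      Un_cv (fun N => sum_f_R0 (fun k => rP (E k)) N) (rP (fun w => exists n, E n w));
  eta_meas : forall n y k, rF (fun w => reta n w y = k);
  eta_init : rP (fun w => reta 0 w = cfg (x :: nil)) = 1;
  eta_markov : forall (n : nat) (hs : nat -> X -> nat) (l : list X) (h' : X -> nat),
      cfg l = hs n ->
      rP (fun w => (forall k, (k <= n)%nat -> reta k w = hs k) /\ reta (S n) w = h')
      = rP (fun w => forall k, (k <= n)%nat -> reta k w = hs k) * offl mu l h'
}.

Section Q.
Context {X : Type} {mu : X -> (X -> nat) -> R} {x : X} (Z : BRW_realization mu x).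

Definition qn (A : X -> Prop) (n : nat) : R :=
  rP Z (fun w => forall k y, (n < k)%nat -> A y -> reta Z k w y = 0%nat).

Definition loc_ext (A : X -> Prop) (w : rOm Z) : Prop :=
  exists n, forall k y, (n < k)%nat -> A y -> reta Z k w y = 0%nat.

(** q(x,A) = probability of local extinction in A (= lim_n q_n(x,A)). *)
Definition q (A : X -> Prop) : R := rP Z (loc_ext A).

Definition qbar : R := q (fun _ => True).

Definition glob_surv (w : rOm Z) : Prop := forall n, exists y, reta Z n w y <> 0%nat.

Definition cond_prob (E B : rOm Z -> Prop) : R := rP Z (fun w => E w /\ B w) / rP Z B.
End Q.

From Stdlib Require Import Reals Lra Lia List Permutation ClassicalEpsilon
  FunctionalExtensionality PropExtensionality Classical Cantor.
Open Scope R_scope.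

(** (1) -> (2) and "q >= qbar" are inclusions of events.  (1) <-> (3) holds separately for
    each [x]: since the empty population is absorbing, [q(x,A) - qbar(x)] is the probability
    of dying out in [A] while surviving globally, and [P(global survival) = 1 - qbar(x)].
    (2) -> (1) is the generating-function argument: with [G u x = E_x[prod u(offspring)]],
    the branching property gives [q_n(.,A) = G^n q_0(.,A)] and [qbar = G^n qbar]; as [G] is
    monotone, [q_0(.,A) <= qbar] yields [q_n(.,A) <= qbar] for all [n], hence [q(.,A) <= qbar]. *)

Lemma pred_ext {T : Type} (E E' : T -> Prop) : (forall w, E w <-> E' w) -> E = E'.
Proof.
  intro H; apply functional_extensionality; intro w; apply propositional_extensionality; auto.
Qed.

Lemma ind_true (P : Prop) : P -> ind P = 1.
Proof. intro H; unfold ind; destruct excluded_middle_informative; tauto. Qed.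

Lemma ind_false (P : Prop) : ~ P -> ind P = 0.
Proof. intro H; unfold ind; destruct excluded_middle_informative; tauto. Qed.

Lemma ind_ext (P Q : Prop) : (P <-> Q) -> ind P = ind Q.
Proof. intro H; unfold ind; do 2 destruct excluded_middle_informative; tauto. Qed.

Lemma ind_01 (P : Prop) : 0 <= ind P <= 1.
Proof. unfold ind; destruct excluded_middle_informative; lra. Qed.

(** ** Finite sums over lists *)

Lemma lsum_app {T} (f : T -> R) l1 l2 : lsum f (l1 ++ l2) = lsum f l1 + lsum f l2.
Proof. induction l1; simpl; lra. Qed.

Lemma lsum_nonneg {T} (f : T -> R) l : (forall t, 0 <= f t) -> 0 <= lsum f l.
Proof. intro H; induction l; simpl; [lra | specialize (H a); lra]. Qed.

Lemma lsum_le {T} (f g : T -> R) l :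
  (forall t, In t l -> f t <= g t) -> lsum f l <= lsum g l.
Proof.
  induction l as [|a l IH]; simpl; intro H; [lra|].
  assert (f a <= g a) by auto. assert (lsum f l <= lsum g l) by auto. lra.
Qed.

Lemma lsum_ext {T} (f g : T -> R) l :
  (forall t, In t l -> f t = g t) -> lsum f l = lsum g l.
Proof. induction l; simpl; intro H; [lra|]. rewrite H, IHl; auto. Qed.

Lemma lsum_zero {T} (f : T -> R) l : (forall t, In t l -> f t = 0) -> lsum f l = 0.
Proof.
  intro H; rewrite (lsum_ext f (fun _ => 0) l H). clear H; induction l; simpl; lra.
Qed.

Lemma lsum_scal {T} (f : T -> R) c l : lsum (fun t => c * f t) l = c * lsum f l.
Proof. induction l; simpl; [lra | rewrite IHl; lra]. Qed.

Lemma lsum_perm {T} (f : T -> R) l l' : Permutation l l' -> lsum f l = lsum f l'.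
Proof. induction 1; simpl; lra. Qed.

Lemma lsum_map {A B} (f : B -> R) (g : A -> B) l :
  lsum f (map g l) = lsum (fun a => f (g a)) l.
Proof. induction l; simpl; auto. rewrite IHl; auto. Qed.

Lemma lsum_incl {T} (f : T -> R) (l1 l2 : list T) : (forall t, 0 <= f t) ->
  NoDup l1 -> incl l1 l2 -> lsum f l1 <= lsum f l2.
Proof.
  intros Hf Hn; revert l2; induction Hn as [|a l1 Ha Hn IH]; intros l2 Hi; simpl.
  - apply lsum_nonneg; auto.
  - assert (Hin : In a l2) by (apply Hi; left; auto).
    destruct (in_split _ _ Hin) as [L1 [L2 ->]].
    rewrite (lsum_perm f _ _ (Permutation_sym (Permutation_middle L1 L2 a))); simpl.
    assert (lsum f l1 <= lsum f (L1 ++ L2)); [|lra].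
    apply IH. intros t Ht.
    assert (Ht' : In t (L1 ++ a :: L2)) by (apply Hi; right; auto).
    apply in_app_or in Ht'. apply in_or_app. destruct Ht' as [H|[H|H]]; auto.
    subst; contradiction.
Qed.

Fixpoint cfilter {T} (P : T -> Prop) (l : list T) : list T :=
  match l with
  | nil => nil
  | t :: l' => if excluded_middle_informative (P t) then t :: cfilter P l' else cfilter P l'
  end.

Lemma cfilter_In {T} (P : T -> Prop) l t : In t (cfilter P l) <-> In t l /\ P t.
Proof.
  induction l; simpl; [tauto|].
  destruct excluded_middle_informative; simpl; rewrite IHl; split; intuition; subst; tauto.
Qed.

Lemma cfilter_NoDup {T} (P : T -> Prop) l : NoDup l -> NoDup (cfilter P l).
Proof.
  induction 1; simpl; [constructor|].
  destruct excluded_middle_informative; auto. constructor; auto. rewrite cfilter_In; tauto.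
Qed.

Lemma cfilter_length {T} (P : T -> Prop) l : (length (cfilter P l) <= length l)%nat.
Proof. induction l; simpl; auto. destruct excluded_middle_informative; simpl; lia. Qed.

Lemma lsum_split {T} (f : T -> R) P l :
  lsum f l = lsum f (cfilter P l) + lsum f (cfilter (fun t => ~ P t) l).
Proof.
  induction l; simpl; [lra|].
  do 2 destruct excluded_middle_informative; simpl; try tauto; lra.
Qed.

(** ** Sums of nonnegative families over arbitrary types

    [sumR f] is the supremum of the finite partial sums; the lemmas below are only
    meaningful for [summable] (i.e. bounded) families. *)

Definition summable {T} (f : T -> R) : Prop := bound (psums f).

Lemma sumR_lub {T} (f : T -> R) : summable f -> is_lub (psums f) (sumR f).
Proof.
  intro H; unfold sumR; destruct excluded_middle_informative; [|tauto].
  destruct completeness; simpl; auto.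
Qed.

Lemma sumR_nosum {T} (f : T -> R) : ~ summable f -> sumR f = 0.
Proof. intro H; unfold sumR; destruct excluded_middle_informative; tauto. Qed.

Lemma sumR_ub {T} (f : T -> R) l : summable f -> NoDup l -> lsum f l <= sumR f.
Proof. intros H Hn; apply (sumR_lub f H); exists l; auto. Qed.

Lemma sumR_least {T} (f : T -> R) M : summable f ->
  (forall l, NoDup l -> lsum f l <= M) -> sumR f <= M.
Proof. intros H Hl; apply (sumR_lub f H). intros r [l [Hn ->]]; auto. Qed.

Lemma summable_intro {T} (f : T -> R) M :
  (forall l, NoDup l -> lsum f l <= M) -> summable f.
Proof. intros H; exists M; intros r [l [Hn ->]]; auto. Qed.

Lemma sumR_ge0 {T} (f : T -> R) : (forall t, 0 <= f t) -> 0 <= sumR f.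
Proof.
  intro H. destruct (classic (summable f)) as [Hs|Hs].
  - apply (Rle_trans _ (lsum f nil)); [simpl; lra|]. apply sumR_ub; auto. constructor.
  - rewrite sumR_nosum; auto; lra.
Qed.

Lemma sumR_approx {T} (f : T -> R) eps : summable f -> eps > 0 ->
  exists l, NoDup l /\ sumR f - eps < lsum f l.
Proof.
  intros Hs He. apply NNPP; intro Hn.
  assert (sumR f <= sumR f - eps); [|lra].
  apply sumR_least; auto. intros l Hl. apply Rnot_lt_le. intro Hc; apply Hn; eauto.
Qed.

Lemma sumR_le {T} (f g : T -> R) : (forall t, 0 <= f t) -> (forall t, f t <= g t) ->
  summable g -> summable f /\ sumR f <= sumR g.
Proof.
  intros H0 H1 Hg.
  assert (Hf : summable f).
  { apply (summable_intro _ (sumR g)). intros l Hl.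
    eapply Rle_trans; [|apply sumR_ub; eauto]. apply lsum_le; auto. }
  split; auto. apply sumR_least; auto. intros l Hl.
  eapply Rle_trans; [|apply sumR_ub; eauto]. apply lsum_le; auto.
Qed.

Lemma sumR_zero {T} (f : T -> R) : (forall t, f t = 0) -> sumR f = 0.
Proof.
  intro H.
  assert (Hs : summable f) by (apply (summable_intro _ 0); intros; rewrite lsum_zero; auto; lra).
  apply Rle_antisym.
  - apply sumR_least; auto. intros; rewrite lsum_zero; auto; lra.
  - apply sumR_ge0; intros; rewrite H; lra.
Qed.

Lemma sumR_single {T} (f : T -> R) a : (forall t, 0 <= f t) -> (forall t, t <> a -> f t = 0) ->
  summable f /\ sumR f = f a.
Proof.
  intros H0 H1.
  assert (Hl : forall l, NoDup l -> lsum f l <= f a).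
  { induction 1 as [|t l Ht Hn IH]; simpl; [apply H0|].
    destruct (classic (t = a)) as [->|Hta].
    - rewrite lsum_zero; [lra|]. intros t Ht'; apply H1; intros ->; contradiction.
    - rewrite H1 by auto. lra. }
  assert (Hs : summable f) by (eapply summable_intro; eauto).
  split; auto. apply Rle_antisym; [apply sumR_least; auto|].
  apply (Rle_trans _ (lsum f (a :: nil))); [simpl; lra|].
  apply sumR_ub; auto. constructor; [simpl; tauto | constructor].
Qed.

Lemma summable_scal {T} (f : T -> R) c : 0 <= c -> summable f -> summable (fun t => c * f t).
Proof.
  intros Hc [M HM]. apply (summable_intro _ (c * M)). intros l Hl; rewrite lsum_scal.
  apply Rmult_le_compat_l; auto. apply HM; exists l; auto.
Qed.

Lemma sumR_scal {T} (f : T -> R) c : 0 <= c -> (forall t, 0 <= f t) ->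
  sumR (fun t => c * f t) = c * sumR f.
Proof.
  intros Hc H0. destruct (Req_dec c 0) as [->|Hc0].
  { rewrite Rmult_0_l. apply sumR_zero; intro; lra. }
  assert (Hiff : summable f <-> summable (fun t => c * f t)).
  { split; [apply summable_scal; auto|]. intro Hs.
    replace f with (fun t => / c * (c * f t))
      by (apply functional_extensionality; intro; field; auto).
    apply summable_scal; auto. apply Rlt_le, Rinv_0_lt_compat; lra. }
  destruct (classic (summable f)) as [Hs|Hs].
  - assert (Hs' := proj1 Hiff Hs). apply Rle_antisym.
    + apply sumR_least; auto. intros l Hl; rewrite lsum_scal.
      apply Rmult_le_compat_l; auto. apply sumR_ub; auto.
    + assert (sumR f <= sumR (fun t => c * f t) / c).
      { apply sumR_least; auto. intros l Hl.
        apply (Rmult_le_reg_l c); [lra|]. field_simplify; [|lra].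
        rewrite <- lsum_scal. apply sumR_ub; auto. }
      apply (Rmult_le_compat_l c) in H; [|lra]. field_simplify in H; lra.
  - rewrite !sumR_nosum; [lra | tauto |]. intro H; apply Hs, Hiff, H.
Qed.

(** ** Summing by fibres (Fubini for nonnegative families) *)
Section Fibres.
Context {P H : Type} (F : P -> R) (pi : P -> H) (HF : forall p, 0 <= F p).

Definition fib (h : H) (p : P) : R := ind (pi p = h) * F p.
Definition fibre_sum (h : H) : R := sumR (fib h).

Lemma fib_nonneg h p : 0 <= fib h p.
Proof. unfold fib. pose proof (ind_01 (pi p = h)); pose proof (HF p); nra. Qed.

Lemma fib_le h p : fib h p <= F p.
Proof. unfold fib. pose proof (ind_01 (pi p = h)); pose proof (HF p); nra. Qed.

Lemma lsum_le_fibre_sums : (forall h, summable (fib h)) -> forall L, NoDup L ->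
  exists Hs, NoDup Hs /\ (forall h, In h Hs -> exists p, In p L /\ pi p = h) /\
             lsum F L <= lsum fibre_sum Hs.
Proof.
  intros Hfs L. remember (length L) as n eqn:Hn. revert L Hn.
  induction n as [n IH] using (well_founded_induction Nat.lt_wf_0).
  intros [|p L'] Hlen HL.
  { exists nil; simpl; repeat split; try tauto; try constructor; lra. }
  set (h := pi p). set (L2 := cfilter (fun t => ~ pi t = h) L').
  assert (HL2 : cfilter (fun t => ~ pi t = h) (p :: L') = L2).
  { simpl; destruct excluded_middle_informative; [exfalso; auto | reflexivity]. }
  assert (Hlen2 : (length L2 < n)%nat)
    by (pose proof (cfilter_length (fun t => ~ pi t = h) L'); simpl in Hlen; unfold L2; lia).
  destruct (IH _ Hlen2 L2 eq_refl) as [Hs2 [Hn2 [Hi2 Hle2]]].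
  { rewrite <- HL2; apply cfilter_NoDup; auto. }
  exists (h :: Hs2). split; [|split].
  - constructor; auto. intro Hin. destruct (Hi2 h Hin) as [t [Ht Hpt]].
    unfold L2 in Ht; rewrite cfilter_In in Ht; tauto.
  - intros h' [<-|Hin]; [exists p; simpl; auto|].
    destruct (Hi2 h' Hin) as [t [Ht Hpt]]. unfold L2 in Ht; rewrite cfilter_In in Ht.
    exists t; simpl; tauto.
  - rewrite (lsum_split F (fun t => pi t = h)), HL2.
    change (lsum fibre_sum (h :: Hs2)) with (fibre_sum h + lsum fibre_sum Hs2).
    assert (lsum F (cfilter (fun t => pi t = h) (p :: L')) <= fibre_sum h); [|lra].
    rewrite (lsum_ext F (fib h)).
    + apply sumR_ub; auto. apply cfilter_NoDup; auto.
    + intros t Ht. rewrite cfilter_In in Ht. unfold fib. rewrite ind_true by tauto. lra.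
Qed.

Lemma sumR_le_fibres : (forall h, summable (fib h)) -> summable fibre_sum ->
  summable F /\ sumR F <= sumR fibre_sum.
Proof.
  intros Hfs Ho.
  assert (Hl : forall L, NoDup L -> lsum F L <= sumR fibre_sum).
  { intros L HL. destruct (lsum_le_fibre_sums Hfs L HL) as [Hs [Hn [_ Hle]]].
    eapply Rle_trans; eauto. apply sumR_ub; auto. }
  assert (Hs : summable F) by (eapply summable_intro; eauto).
  split; auto. apply sumR_least; auto.
Qed.

Lemma sumR_ge_fibres : summable F ->
  (forall h, summable (fib h)) /\ summable fibre_sum /\ sumR fibre_sum <= sumR F.
Proof.
  intros Hs.
  assert (Hfs : forall h, summable (fib h))
    by (intro h; apply (sumR_le (fib h) F); auto using fib_nonneg, fib_le).
  assert (Happrox : forall Hs, NoDup Hs -> forall eps, eps > 0 -> exists L, NoDup L /\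
            (forall p, In p L -> In (pi p) Hs) /\ lsum fibre_sum Hs - eps <= lsum F L).
  { induction 1 as [|h Hs' Hh Hn IH]; intros eps He.
    { exists nil; simpl; repeat split; try tauto; try constructor; lra. }
    destruct (IH (eps/2)) as [L' [HL' [Hi' Hle']]]; [lra|].
    destruct (sumR_approx (fib h) (eps/2) (Hfs h)) as [Lh [HLh Hap]]; [lra|].
    set (Lh' := cfilter (fun t => pi t = h) Lh).
    assert (Hfib : lsum (fib h) Lh = lsum F Lh').
    { rewrite (lsum_split (fib h) (fun t => pi t = h)).
      rewrite (lsum_zero (fib h) (cfilter (fun t => ~ pi t = h) Lh)), Rplus_0_r.
      - apply lsum_ext. intros t Ht. unfold Lh' in Ht; rewrite cfilter_In in Ht.
        unfold fib; rewrite ind_true by tauto; lra.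
      - intros t Ht; rewrite cfilter_In in Ht. unfold fib; rewrite ind_false by tauto; lra. }
    exists (Lh' ++ L'). split; [|split].
    - apply NoDup_app; auto. apply cfilter_NoDup; auto.
      intros t Ht Ht'. unfold Lh' in Ht; rewrite cfilter_In in Ht.
      apply Hi' in Ht'. destruct Ht as [_ Ht]; rewrite Ht in Ht'. contradiction.
    - intros p Hp. apply in_app_or in Hp. destruct Hp as [Hp|Hp]; [|right; auto].
      unfold Lh' in Hp; rewrite cfilter_In in Hp. left; symmetry; tauto.
    - rewrite lsum_app. simpl lsum. unfold fibre_sum at 1. lra. }
  assert (Hb : forall Hs, NoDup Hs -> lsum fibre_sum Hs <= sumR F).
  { intros Hs0 Hn0. apply Rle_plus_epsilon. intros eps He.
    destruct (Happrox Hs0 Hn0 eps He) as [L [HL [_ Hle]]].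
    pose proof (sumR_ub F L Hs HL). lra. }
  assert (Ho : summable fibre_sum) by (eapply summable_intro; eauto).
  repeat split; auto. apply sumR_least; auto.
Qed.

Lemma sumR_by_fibres : summable F -> summable fibre_sum /\ sumR F = sumR fibre_sum.
Proof.
  intro Hs. destruct (sumR_ge_fibres Hs) as [H1 [H2 H3]].
  destruct (sumR_le_fibres H1 H2) as [_ H4]. split; auto. lra.
Qed.
End Fibres.

Lemma sumR_reindex {P Q} (F : P -> R) (iota : Q -> P) : (forall p, 0 <= F p) ->
  (forall q q', iota q = iota q' -> q = q') ->
  (forall p, (forall q, iota q <> p) -> F p = 0) ->
  summable (fun q => F (iota q)) -> summable F /\ sumR F = sumR (fun q => F (iota q)).
Proof.
  intros H0 Hinj Hout Hs.
  assert (Hpre : forall L, NoDup L -> (forall p, In p L -> exists q, iota q = p) ->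
            exists Lq, NoDup Lq /\ map iota Lq = L).
  { induction 1 as [|p L Hp Hn IH]; intros Hr.
    - exists nil; split; [constructor | auto].
    - destruct (Hr p (or_introl eq_refl)) as [q Hq].
      destruct IH as [Lq [HLq Hm]]; [intros; apply Hr; right; auto|].
      exists (q :: Lq); split; simpl; [|congruence]. constructor; auto.
      intro Hi; apply Hp. rewrite <- Hm, <- Hq. apply in_map; auto. }
  assert (Hl : forall L, NoDup L -> lsum F L <= sumR (fun q => F (iota q))).
  { intros L HL. rewrite (lsum_split F (fun p => exists q, iota q = p)).
    rewrite (lsum_zero F (cfilter (fun t => ~ _) L)), Rplus_0_r.
    2:{ intros t Ht; rewrite cfilter_In in Ht.
        apply Hout. intros q Hq; apply (proj2 Ht); eauto. }
    destruct (Hpre (cfilter (fun p => exists q, iota q = p) L)) as [Lq [HLq Hm]].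
    - apply cfilter_NoDup; auto.
    - intros p Hp; rewrite cfilter_In in Hp; tauto.
    - rewrite <- Hm, lsum_map. apply sumR_ub; auto. }
  assert (HsF : summable F) by (eapply summable_intro; eauto).
  split; auto. apply Rle_antisym; apply sumR_least; auto.
  intros Lq HLq. rewrite <- lsum_map. apply sumR_ub; auto.
  apply FinFun.Injective_map_NoDup; auto.
Qed.

Lemma sumR_prod {T1 T2} (a : T1 -> R) (b : T2 -> R) :
  (forall t, 0 <= a t) -> (forall t, 0 <= b t) -> summable a -> summable b ->
  summable (fun p : T1 * T2 => a (fst p) * b (snd p)) /\
  sumR (fun p : T1 * T2 => a (fst p) * b (snd p)) = sumR a * sumR b.
Proof.
  intros Ha Hb Hsa Hsb.
  set (F := fun p : T1 * T2 => a (fst p) * b (snd p)).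
  assert (HF : forall p, 0 <= F p)
    by (intro p; unfold F; pose proof (Ha (fst p)); pose proof (Hb (snd p)); nra).
  assert (Hrow : forall s, summable (fib F fst s) /\ sumR (fib F fst s) = a s * sumR b).
  { intro s.
    assert (E : (fun t => fib F fst s (s, t)) = (fun t => a s * b t)).
    { apply functional_extensionality; intro t; unfold fib, F; simpl.
      rewrite ind_true; auto; lra. }
    destruct (sumR_reindex (fib F fst s) (fun t => (s, t))) as [H1 H2].
    - apply fib_nonneg; auto.
    - intros t t' Ht; inversion Ht; auto.
    - intros [s' t] Hp. unfold fib; simpl. rewrite ind_false; [lra|].
      intros ->; apply (Hp t); auto.
    - rewrite E. apply summable_scal; auto.
    - split; auto. rewrite H2, E. apply sumR_scal; auto. }
  assert (Ho : fibre_sum F fst = fun s => sumR b * a s).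
  { apply functional_extensionality; intro s; unfold fibre_sum.
    rewrite (proj2 (Hrow s)); lra. }
  assert (Hb0 : 0 <= sumR b) by (apply sumR_ge0; auto).
  destruct (sumR_le_fibres F fst) as [H1 _].
  - intro s; apply Hrow.
  - rewrite Ho; apply summable_scal; auto.
  - split; auto. rewrite (proj2 (sumR_by_fibres F fst HF H1)), Ho, sumR_scal; auto. lra.
Qed.

(** ** Configurations and monomials

    A configuration is a finitely supported [h : X -> nat]; it is listed (up to order)
    by any list [l] with [cfg l = h].  For [u : X -> [0,1]] the monomial
    [monom u h = prod_y u(y)^(h y)] is the generating-function weight of [h]. *)
Section Configurations.
Context {X : Type}.

Lemma cfg_app (l1 l2 : list X) y : cfg (l1 ++ l2) y = (cfg l1 y + cfg l2 y)%nat.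
Proof. induction l1; simpl; auto. rewrite IHl1; lia. Qed.

Lemma cfg_In (l : list X) y : cfg l y <> 0%nat <-> In y l.
Proof.
  induction l; simpl; [tauto|].
  destruct excluded_middle_informative; split; intro H; try tauto; try lia.
  all: try (right; apply IHl; lia).
  all: destruct H; [contradiction|]; apply IHl in H; lia.
Qed.

Lemma fin_cfg (l : list X) : fin_supp (cfg l).
Proof. exists l; intros y; apply cfg_In. Qed.

Lemma fin_add (f g : X -> nat) :
  fin_supp f -> fin_supp g -> fin_supp (fun y => (f y + g y)%nat).
Proof.
  intros [l1 H1] [l2 H2]. exists (l1 ++ l2). intros y Hy. apply in_or_app.
  destruct (Nat.eq_dec (f y) 0); [right; apply H2 | left; apply H1]; lia.
Qed.

Lemma cfg_repeat (a : X) k y :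
  cfg (repeat a k) y = if excluded_middle_informative (a = y) then k else 0%nat.
Proof. induction k; simpl; destruct excluded_middle_informative; lia. Qed.

Lemma fin_exists_list (h : X -> nat) : fin_supp h -> exists l, cfg l = h.
Proof.
  intros [s Hs]. revert h Hs; induction s as [|a s IH]; intros h Hs.
  - exists nil. apply functional_extensionality; intro y. simpl.
    destruct (Nat.eq_dec (h y) 0); auto. destruct (Hs y n).
  - set (h' := fun y => if excluded_middle_informative (a = y) then 0%nat else h y).
    destruct (IH h') as [l' Hl'].
    { intros y Hy. unfold h' in Hy. destruct excluded_middle_informative; [lia|].
      destruct (Hs y) as [E|E]; auto. contradiction. }
    exists (repeat a (h a) ++ l'). apply functional_extensionality; intro y.
    rewrite cfg_app, cfg_repeat, Hl'. unfold h'.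
    destruct excluded_middle_informative; subst; lia.
Qed.

Lemma cfg_perm (l l' : list X) : cfg l = cfg l' -> Permutation l l'.
Proof.
  revert l'; induction l as [|a l IH]; intros l' H.
  - destruct l' as [|b l']; auto. exfalso.
    assert (Hb : cfg (b :: l') b <> 0%nat) by (apply cfg_In; left; auto).
    rewrite <- H in Hb; simpl in Hb; lia.
  - assert (Hin : In a l').
    { apply cfg_In; rewrite <- H; simpl. destruct excluded_middle_informative; [lia|tauto]. }
    destruct (in_split _ _ Hin) as [L1 [L2 ->]].
    eapply perm_trans; [|apply Permutation_middle]. constructor. apply IH.
    apply functional_extensionality; intro y. pose proof (f_equal (fun f => f y) H) as Hy.
    simpl in Hy. rewrite cfg_app in Hy |- *. simpl in Hy. lia.
Qed.

Definition listof (h : X -> nat) : list X :=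
  match excluded_middle_informative (exists l, cfg l = h) with
  | left H => proj1_sig (constructive_indefinite_description _ H)
  | right _ => nil
  end.

Lemma cfg_listof h : fin_supp h -> cfg (listof h) = h.
Proof.
  intro Hf. unfold listof. destruct excluded_middle_informative as [H|H].
  - destruct constructive_indefinite_description; auto.
  - destruct H; apply fin_exists_list; auto.
Qed.

Fixpoint lprod (u : X -> R) (l : list X) : R :=
  match l with nil => 1 | a :: l' => u a * lprod u l' end.

Lemma lprod_app u l1 l2 : lprod u (l1 ++ l2) = lprod u l1 * lprod u l2.
Proof. induction l1; simpl; [lra | rewrite IHl1; lra]. Qed.

Lemma lprod_perm u l l' : Permutation l l' -> lprod u l = lprod u l'.
Proof. induction 1; simpl; try rewrite IHPermutation; try lra; congruence. Qed.

Lemma lprod_one l : lprod (fun _ => 1) l = 1.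
Proof. induction l; simpl; [|rewrite IHl]; lra. Qed.

Definition unit01 (u : X -> R) : Prop := forall y, 0 <= u y <= 1.

Lemma lprod_bounds u l : unit01 u -> 0 <= lprod u l <= 1.
Proof. intro H; induction l; simpl; [lra|]. specialize (H a). nra. Qed.

Lemma lprod_mono u v l : (forall y, 0 <= u y <= v y) -> lprod u l <= lprod v l.
Proof.
  intro H; induction l as [|a l IH]; simpl; [lra|].
  assert (0 <= lprod u l).
  { clear IH; induction l; simpl; [lra|]. specialize (H a0); nra. }
  specialize (H a); nra.
Qed.

Definition monom (u : X -> R) (h : X -> nat) : R := lprod u (listof h).

Lemma monom_cfg u l : monom u (cfg l) = lprod u l.
Proof. unfold monom. apply lprod_perm, cfg_perm, cfg_listof, fin_cfg. Qed.

Lemma monom_add u f g : fin_supp f -> fin_supp g ->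
  monom u (fun y => (f y + g y)%nat) = monom u f * monom u g.
Proof.
  intros Hf Hg.
  assert (E : (fun y => (f y + g y)%nat) = cfg (listof f ++ listof g)).
  { apply functional_extensionality; intro y. rewrite cfg_app, !cfg_listof; auto. }
  rewrite E, monom_cfg, lprod_app. reflexivity.
Qed.

Lemma monom_zero u : monom u (fun _ => 0%nat) = 1.
Proof. change (fun _ : X => 0%nat) with (cfg (@nil X)). rewrite monom_cfg; reflexivity. Qed.

Lemma monom_one h : monom (fun _ => 1) h = 1.
Proof. apply lprod_one. Qed.

Lemma monom_bounds u h : unit01 u -> 0 <= monom u h <= 1.
Proof. intros; apply lprod_bounds; auto. Qed.

Definition vanish (B : X -> Prop) (h : X -> nat) : Prop := forall y, B y -> h y = 0%nat.

(** [mask B u] is [u] set to 0 on [B]: its monomials detect configurations vanishing on [B]. *)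
Definition mask (B : X -> Prop) (u : X -> R) (y : X) : R :=
  if excluded_middle_informative (B y) then 0 else u y.

Lemma mask_unit B u : unit01 u -> unit01 (mask B u).
Proof. intros H y; unfold mask; destruct excluded_middle_informative; auto; lra. Qed.

Lemma mask_mono B u v : (forall y, 0 <= u y <= v y) -> forall y, 0 <= mask B u y <= mask B v y.
Proof. intros H y; unfold mask; destruct excluded_middle_informative; auto; lra. Qed.

Lemma lprod_mask B u l : lprod (mask B u) l = ind (forall y, In y l -> ~ B y) * lprod u l.
Proof.
  induction l as [|a l IH]; simpl.
  - rewrite ind_true; [lra|tauto].
  - rewrite IH. unfold mask; destruct excluded_middle_informative as [Hb|Hb].
    + rewrite (ind_false (forall y, a = y \/ In y l -> ~ B y)); [lra|].
      intro Hc; apply (Hc a); auto.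
    + destruct (classic (forall y, In y l -> ~ B y)) as [Hc|Hc].
      * rewrite !ind_true; [lra| |auto]. intros y [<-|Hy]; auto.
      * rewrite !ind_false; [lra| |auto]. intro Hd; apply Hc; auto.
Qed.

Lemma monom_mask B u h : fin_supp h -> monom (mask B u) h = ind (vanish B h) * monom u h.
Proof.
  intro Hf. unfold monom. rewrite lprod_mask. f_equal.
  pose proof (cfg_listof h Hf) as Hc. apply ind_ext. split; intros H y.
  - intros Hb. rewrite <- Hc.
    destruct (Nat.eq_dec (cfg (listof h) y) 0) as [E|E]; auto.
    apply cfg_In in E. exfalso; apply (H y E Hb).
  - intros Hi Hb. apply cfg_In in Hi. apply Hi. rewrite Hc. apply H, Hb.
Qed.

End Configurations.

(** ** Laws on configurations and their generating functions *)
Section GeneratingFunctions.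
Context {X : Type}.

Definition config_law (m : (X -> nat) -> R) : Prop :=
  (forall h, 0 <= m h) /\ (forall h, m h <> 0 -> fin_supp h).

Definition pgf (m : (X -> nat) -> R) (u : X -> R) : R := sumR (fun h => m h * monom u h).

Lemma pgf_term_nonneg m u h : config_law m -> unit01 u -> 0 <= m h * monom u h.
Proof. intros [Hm _] Hu. pose proof (Hm h); pose proof (monom_bounds u h Hu); nra. Qed.

Lemma config_law_conv m1 m2 : config_law m1 -> config_law m2 -> config_law (conv m1 m2).
Proof.
  intros [P1 F1] [P2 F2].
  assert (Hnn : forall p h, 0 <= ind (forall y, (fst p y + snd p y)%nat = h y) *
                                    (m1 (fst p) * m2 (snd p))).
  { intros p h. pose proof (ind_01 (forall y, (fst p y + snd p y)%nat = h y)).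
    pose proof (P1 (fst p)); pose proof (P2 (snd p)).
    apply Rmult_le_pos; [lra | apply Rmult_le_pos; auto]. }
  split; [intro h; apply sumR_ge0; auto|].
  intros h Hh. apply NNPP; intro Hnf. apply Hh, sumR_zero. intros p.
  destruct (classic (forall y, (fst p y + snd p y)%nat = h y)) as [Hp|Hp];
    [|rewrite ind_false; auto; lra].
  destruct (Req_dec (m1 (fst p)) 0) as [E|E]; [rewrite E; lra|].
  destruct (Req_dec (m2 (snd p)) 0) as [E'|E']; [rewrite E'; lra|].
  exfalso. apply Hnf.
  replace h with (fun y => (fst p y + snd p y)%nat) by (apply functional_extensionality; auto).
  apply fin_add; auto.
Qed.

Lemma pgf_conv m1 m2 u : config_law m1 -> config_law m2 -> unit01 u ->
  summable (fun h => m1 h * monom u h) -> summable (fun h => m2 h * monom u h) ->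
  summable (fun h => conv m1 m2 h * monom u h) /\ pgf (conv m1 m2) u = pgf m1 u * pgf m2 u.
Proof.
  intros L1 L2 Hu S1 S2.
  set (pi := fun (p : (X -> nat) * (X -> nat)) (y : X) => (fst p y + snd p y)%nat).
  set (a1 := fun f => m1 f * monom u f). set (a2 := fun f => m2 f * monom u f).
  set (F := fun p : (X -> nat) * (X -> nat) => a1 (fst p) * a2 (snd p)).
  assert (Ha1 : forall t, 0 <= a1 t) by (intro; apply pgf_term_nonneg; auto).
  assert (Ha2 : forall t, 0 <= a2 t) by (intro; apply pgf_term_nonneg; auto).
  assert (HF0 : forall p, 0 <= F p)
    by (intro p; pose proof (Ha1 (fst p)); pose proof (Ha2 (snd p)); unfold F; nra).
  destruct (sumR_prod a1 a2 Ha1 Ha2 S1 S2) as [HsF Hsum]. fold F in HsF, Hsum.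
  (* the fibre of [F] over [h] sums the pairs of configurations adding up to [h] *)
  assert (Hfibre : fibre_sum F pi = fun h => conv m1 m2 h * monom u h).
  { apply functional_extensionality; intro h. unfold fibre_sum, conv.
    rewrite Rmult_comm, <- sumR_scal.
    2:{ apply monom_bounds; auto. }
    2:{ intro p. pose proof (ind_01 (forall y, (fst p y + snd p y)%nat = h y)).
        destruct L1 as [P1 _], L2 as [P2 _]. pose proof (P1 (fst p)); pose proof (P2 (snd p)).
        apply Rmult_le_pos; [lra | apply Rmult_le_pos; auto]. }
    f_equal. apply functional_extensionality; intro p. unfold fib, F, a1, a2.
    destruct (classic (pi p = h)) as [Hp|Hp].
    - rewrite ind_true by auto. rewrite ind_true by (intro y; rewrite <- Hp; reflexivity).
      destruct (Req_dec (m1 (fst p)) 0) as [E|E]; [rewrite E; lra|].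
      destruct (Req_dec (m2 (snd p)) 0) as [E'|E']; [rewrite E'; lra|].
      rewrite <- Hp. unfold pi. rewrite monom_add; [lra | apply L1 | apply L2]; auto.
    - rewrite !ind_false; [lra| |auto].
      intro Hq; apply Hp, functional_extensionality; auto. }
  destruct (sumR_by_fibres F pi HF0 HsF) as [Hso Heq].
  rewrite Hfibre in Hso, Heq. split; auto. unfold pgf. rewrite <- Heq. exact Hsum.
Qed.

Context (mu : X -> (X -> nat) -> R) (Hmu : is_BRW mu).

(** The generating function of the BRW: [G u x = E_x [prod over offspring of u]]. *)
Definition G (u : X -> R) (x : X) : R := pgf (mu x) u.

Lemma mu_law x : config_law (mu x).
Proof. destruct (Hmu x) as [H0 [H1 _]]; split; auto. Qed.

Lemma mu_summable x : summable (mu x).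
Proof. destruct (Hmu x) as [_ [_ H]]. apply NNPP; intro Hn. rewrite sumR_nosum in H; auto; lra. Qed.

Lemma pgf_mu_summable u x : unit01 u -> summable (fun f => mu x f * monom u f).
Proof.
  intro Hu. apply (sumR_le _ (mu x)); auto using mu_summable.
  - intro; apply pgf_term_nonneg; auto using mu_law.
  - intro f. destruct (mu_law x) as [H0 _].
    pose proof (monom_bounds u f Hu); pose proof (H0 f); nra.
Qed.

Lemma G_unit u : unit01 u -> unit01 (G u).
Proof.
  intros Hu x. destruct (Hmu x) as [H0 [_ H1]]. split.
  - apply sumR_ge0; intro; apply pgf_term_nonneg; auto using mu_law.
  - rewrite <- H1. apply sumR_le; auto using mu_summable.
    + intro; apply pgf_term_nonneg; auto using mu_law.
    + intro f; pose proof (monom_bounds u f Hu); pose proof (H0 f); nra.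
Qed.

Lemma G_mono u v : unit01 u -> unit01 v -> (forall y, u y <= v y) -> forall x, G u x <= G v x.
Proof.
  intros Hu Hv H x. apply sumR_le; auto using pgf_mu_summable.
  - intro; apply pgf_term_nonneg; auto using mu_law.
  - intro f. destruct (mu_law x) as [H0 _]. apply Rmult_le_compat_l; auto.
    apply lprod_mono. intro y; specialize (Hu y); specialize (H y); lra.
Qed.

Lemma G_one x : G (fun _ => 1) x = 1.
Proof.
  unfold G, pgf. destruct (Hmu x) as [_ [_ H1]]. transitivity (sumR (mu x)); auto. f_equal.
  apply functional_extensionality; intro f; rewrite monom_one; lra.
Qed.

Lemma offl_law l : config_law (offl mu l) /\
  forall u, unit01 u -> summable (fun h => offl mu l h * monom u h) /\
                       pgf (offl mu l) u = lprod (G u) l.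
Proof.
  induction l as [|a l [IHlaw IHpgf]].
  - split.
    + split; [intro; apply ind_01|]. intros h Hh. exists nil; intros y Hy.
      unfold offl, ind in Hh. destruct excluded_middle_informative; [|lra]. apply Hy; auto.
    + intros u Hu. simpl.
      destruct (sumR_single (fun h => ind (forall y, h y = 0%nat) * monom u h) (fun _ => 0%nat))
        as [Hs Hsum].
      * intro h; pose proof (ind_01 (forall y, h y = 0%nat)); pose proof (monom_bounds u h Hu); nra.
      * intros h Hh. rewrite ind_false; [lra|].
        intro Hc; apply Hh; apply functional_extensionality; auto.
      * split; auto. unfold pgf. rewrite Hsum, monom_zero, ind_true; auto; lra.
  - split; [apply config_law_conv; auto using mu_law|].
    intros u Hu. destruct (IHpgf u Hu) as [S2 E2].
    destruct (pgf_conv (mu a) (offl mu l) u (mu_law a) IHlaw Hu (pgf_mu_summable u a Hu) S2)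
      as [Hs Heq].
    split; auto. simpl. rewrite Heq, E2. reflexivity.
Qed.

Lemma offl_nonneg l h : 0 <= offl mu l h.
Proof. apply (proj1 (offl_law l)). Qed.

Lemma offl_fin l h : offl mu l h <> 0 -> fin_supp h.
Proof. apply (proj1 (offl_law l)). Qed.

Lemma offl_mass l : sumR (offl mu l) = 1.
Proof.
  destruct (proj2 (offl_law l) (fun _ => 1)) as [_ H]; [intro; lra|].
  unfold pgf in H.
  replace (fun h => offl mu l h * monom (fun _ => 1) h) with (offl mu l) in H
    by (apply functional_extensionality; intro; rewrite monom_one; lra).
  rewrite H. replace (G (fun _ => 1)) with (fun _ : X => 1) by
    (apply functional_extensionality; intro; rewrite G_one; auto).
  apply lprod_one.
Qed.
End GeneratingFunctions.

(** ** Elementary probability on a realization *)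
Section Probability.
Context {X : Type} {mu : X -> (X -> nat) -> R} {x0 : X} (Z : BRW_realization mu x0).

Notation Om := (rOm Z).
Notation Fm := (rF Z).
Notation P := (rP Z).
Notation eta := (reta Z).

Lemma meas_ext (E E' : Om -> Prop) : Fm E -> (forall w, E w <-> E' w) -> Fm E'.
Proof. intros H1 H2. rewrite <- (pred_ext E E' H2). auto. Qed.

Lemma P_ext (E E' : Om -> Prop) : (forall w, E w <-> E' w) -> P E = P E'.
Proof. intros H; rewrite (pred_ext E E' H); auto. Qed.

Lemma meas_not E : Fm E -> Fm (fun w => ~ E w).
Proof. apply F_compl. Qed.

Lemma meas_const (C : Prop) : Fm (fun _ => C).
Proof.
  destruct (classic C).
  - eapply meas_ext; [apply F_full|]; simpl; tauto.
  - eapply meas_ext; [apply meas_not, F_full|]; simpl; tauto.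
Qed.

Lemma meas_exn (E : nat -> Om -> Prop) : (forall n, Fm (E n)) -> Fm (fun w => exists n, E n w).
Proof. apply F_union. Qed.

Lemma meas_alln (E : nat -> Om -> Prop) : (forall n, Fm (E n)) -> Fm (fun w => forall n, E n w).
Proof.
  intro H. eapply meas_ext; [apply meas_not, meas_exn; intro n; apply meas_not, H|].
  intro w; split.
  - intros Hn n. apply NNPP; intro; apply Hn; eauto.
  - intros Ha [n Hn]; auto.
Qed.

Lemma meas_or E1 E2 : Fm E1 -> Fm E2 -> Fm (fun w => E1 w \/ E2 w).
Proof.
  intros H1 H2. eapply meas_ext.
  - apply (meas_exn (fun n w => match n with O => E1 w | _ => E2 w end)). intros [|n]; auto.
  - intro w; split; [intros [[|n] Hn]; auto|].
    intros [H|H]; [exists O | exists 1%nat]; auto.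
Qed.

Lemma meas_and E1 E2 : Fm E1 -> Fm E2 -> Fm (fun w => E1 w /\ E2 w).
Proof.
  intros H1 H2. eapply meas_ext.
  - apply (meas_not (fun w => ~ E1 w \/ ~ E2 w)), meas_or; apply meas_not; auto.
  - intro w; simpl; tauto.
Qed.

Lemma meas_imp E1 E2 : Fm E1 -> Fm E2 -> Fm (fun w => E1 w -> E2 w).
Proof.
  intros H1 H2. eapply meas_ext.
  - apply (meas_or (fun w => ~ E1 w) E2); [apply meas_not|]; auto.
  - intro w; simpl; tauto.
Qed.

Lemma P_empty : P (fun _ => False) = 0.
Proof.
  pose proof (P_sigma Z (fun _ _ => False) (fun _ => meas_const False)
                (fun _ _ _ _ H _ => H)) as H.
  set (p := P (fun _ => False)) in *.
  rewrite (P_ext _ (fun _ => False)) in H by (intro w; split; [intros [_ []] | tauto]).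
  fold p in H.
  (* consecutive partial sums [(N+1) p] differ by [p], and their differences tend to 0 *)
  assert (Hd : Un_cv (fun N => sum_f_R0 (fun _ => p) (S N) - sum_f_R0 (fun _ => p) N) (p - p)).
  { apply CV_minus; auto.
    intros eps Heps; destruct (H eps Heps) as [N HN]; exists N; intros; apply HN; lia. }
  apply (UL_sequence (fun _ => p)).
  - intros eps He'; exists O; intros; rewrite R_dist_eq; auto.
  - replace 0 with (p - p) by lra. eapply Un_cv_ext; [|apply Hd]. intro; simpl; lra.
Qed.

Lemma P_add E1 E2 : Fm E1 -> Fm E2 -> (forall w, E1 w -> E2 w -> False) ->
  P (fun w => E1 w \/ E2 w) = P E1 + P E2.
Proof.
  intros H1 H2 Hd.
  set (E := fun n w => match n with O => E1 w | 1%nat => E2 w | _ => False end).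
  assert (HE : forall n, Fm (E n)) by (intros [|[|n]]; unfold E; auto using meas_const).
  assert (Hdis : forall n m w, n <> m -> E n w -> E m w -> False)
    by (intros [|[|n]] [|[|m]] w; unfold E; intros; try lia; eauto).
  pose proof (P_sigma Z E HE Hdis) as H.
  rewrite (P_ext _ (fun w => E1 w \/ E2 w)) in H.
  2:{ intro w; split; [intros [[|[|n]] Hn]; simpl in Hn; tauto|].
      intros [Hw|Hw]; [exists O | exists 1%nat]; auto. }
  apply (UL_sequence _ _ _ H). intros eps Heps; exists 1%nat; intros n Hn.
  destruct n as [|n]; [lia|]. clear Hn.
  replace (sum_f_R0 (fun k => P (E k)) (S n)) with (P E1 + P E2); [rewrite R_dist_eq; auto|].
  induction n; [reflexivity|].
  change (sum_f_R0 (fun k => P (E k)) (S (S n)))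
    with (sum_f_R0 (fun k => P (E k)) (S n) + P (fun _ => False)).
  rewrite P_empty, <- IHn; lra.
Qed.

Lemma P_split E C : Fm E -> Fm C -> P E = P (fun w => E w /\ C w) + P (fun w => E w /\ ~ C w).
Proof.
  intros HE HC. rewrite <- P_add.
  - apply P_ext; intro w; tauto.
  - apply meas_and; auto.
  - apply meas_and; auto; apply meas_not; auto.
  - tauto.
Qed.

Lemma P_mono E1 E2 : Fm E1 -> Fm E2 -> (forall w, E1 w -> E2 w) -> P E1 <= P E2.
Proof.
  intros H1 H2 Hi. rewrite (P_split E2 E1 H2 H1).
  rewrite (P_ext (fun w => E2 w /\ E1 w) E1) by (intro w; split; [tauto|auto]).
  assert (0 <= P (fun w => E2 w /\ ~ E1 w)); [|lra].
  apply P_nonneg, meas_and; auto; apply meas_not; auto.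
Qed.

Lemma P_le1 E : Fm E -> P E <= 1.
Proof. intro H. rewrite <- (P_full Z). apply P_mono; auto using meas_const. Qed.

Lemma P_compl E : Fm E -> P (fun w => ~ E w) = 1 - P E.
Proof.
  intro H. rewrite <- (P_full Z), (P_split (fun _ => True) E (meas_const True) H).
  rewrite (P_ext (fun w => True /\ E w) E), (P_ext (fun w => True /\ ~ E w) (fun w => ~ E w));
    [lra | intro; tauto | intro; tauto].
Qed.

Lemma P_null_sub E N : Fm E -> Fm N -> P N = 0 -> (forall w, E w -> N w) -> P E = 0.
Proof. intros HE HN H0 Hi. apply Rle_antisym; [rewrite <- H0; apply P_mono|apply P_nonneg]; auto. Qed.

Lemma P_and_sure E C : Fm E -> Fm C -> P C = 1 -> P (fun w => E w /\ C w) = P E.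
Proof.
  intros HE HC H1. rewrite (P_split E C HE HC).
  assert (P (fun w => E w /\ ~ C w) = 0); [|lra].
  apply (P_null_sub _ (fun w => ~ C w)).
  - apply meas_and; auto; apply meas_not; auto.
  - apply meas_not; auto.
  - rewrite P_compl, H1; auto; lra.
  - tauto.
Qed.

Lemma P_union_le E1 E2 : Fm E1 -> Fm E2 -> P (fun w => E1 w \/ E2 w) <= P E1 + P E2.
Proof.
  intros H1 H2. rewrite (P_ext _ (fun w => E1 w \/ (E2 w /\ ~ E1 w))) by (intro; tauto).
  assert (H21 : Fm (fun w => E2 w /\ ~ E1 w)) by (apply meas_and; auto; apply meas_not; auto).
  rewrite P_add; auto; [|tauto].
  assert (P (fun w => E2 w /\ ~ E1 w) <= P E2); [apply P_mono; auto; tauto | lra].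
Qed.

Lemma P_inc (E : nat -> Om -> Prop) : (forall n, Fm (E n)) -> (forall n w, E n w -> E (S n) w) ->
  Un_cv (fun n => P (E n)) (P (fun w => exists n, E n w)).
Proof.
  intros HE Hinc.
  assert (Hmono : forall n m w, (n <= m)%nat -> E n w -> E m w)
    by (intros n m w Hnm; induction Hnm; auto).
  set (D := fun n w => match n with O => E O w | S k => E (S k) w /\ ~ E k w end).
  assert (HD : forall n, Fm (D n))
    by (intros [|n]; unfold D; [auto | apply meas_and; auto; apply meas_not; auto]).
  assert (Hdis : forall n m w, n <> m -> D n w -> D m w -> False).
  { intros n m w Hnm Hn Hm.
    destruct (Nat.lt_total n m) as [Hl|[Hl|Hl]]; [| contradiction |].
    - destruct m as [|m]; [lia|]. apply (proj2 Hm).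
      destruct n as [|n]; simpl in Hn; [apply (Hmono O)|apply (Hmono (S n))]; try lia; tauto.
    - destruct n as [|n]; [lia|]. apply (proj2 Hn).
      destruct m as [|m]; simpl in Hm; [apply (Hmono O)|apply (Hmono (S m))]; try lia; tauto. }
  pose proof (P_sigma Z D HD Hdis) as H.
  rewrite (P_ext _ (fun w => exists n, E n w)) in H.
  2:{ intro w; split.
      - intros [[|n] Hn]; simpl in Hn; [exists O | exists (S n)]; tauto.
      - intros [n Hn]. induction n; [exists O; auto|].
        destruct (classic (E n w)); auto. exists (S n); simpl; auto. }
  eapply Un_cv_ext; [|apply H].
  intro n; induction n; simpl; auto. rewrite IHn, (P_split (E (S n)) (E n)); auto.
  rewrite (P_ext (fun w => E (S n) w /\ E n w) (E n)); auto.
  intro w; split; [tauto|auto].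
Qed.

Lemma P_dec (E : nat -> Om -> Prop) : (forall n, Fm (E n)) -> (forall n w, E (S n) w -> E n w) ->
  Un_cv (fun n => P (E n)) (P (fun w => forall n, E n w)).
Proof.
  intros HE Hdec.
  pose proof (P_inc (fun n w => ~ E n w) (fun n => meas_not _ (HE n))) as H.
  specialize (H ltac:(intros n w H1 H2; apply H1, Hdec, H2)). cbv beta in H.
  assert (Hm : Fm (fun w => forall n, E n w)) by (apply meas_alln; auto).
  rewrite (P_ext (fun w => exists n, ~ E n w) (fun w => ~ forall n, E n w)), P_compl in H; auto.
  2:{ intro w; split; [intros [n Hn] Ha; auto|].
      intro Hn; apply NNPP; intro Hc; apply Hn; intro n; apply NNPP; intro; apply Hc; eauto. }
  apply (Un_cv_ext (fun n => 1 - P (fun w => ~ E n w))); [intro; rewrite P_compl; auto; lra|].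
  replace (P (fun w => forall n, E n w)) with (1 - (1 - P (fun w => forall n, E n w))) by lra.
  apply CV_minus; auto. intros eps Heps; exists O; intros; rewrite R_dist_eq; auto.
Qed.

Lemma P_dec_const (E : nat -> Om -> Prop) : (forall n, Fm (E n)) -> (forall n w, E (S n) w -> E n w) ->
  (forall n, P (E n) = P (E O)) -> P (fun w => E O w /\ ~ forall n, E n w) = 0.
Proof.
  intros HE Hdec Hc.
  assert (Hall : Fm (fun w => forall n, E n w)) by (apply meas_alln; auto).
  assert (Hlim : P (fun w => forall n, E n w) = P (E O)).
  { apply (UL_sequence _ _ _ (P_dec E HE Hdec)).
    intros eps Heps; exists O; intros; rewrite Hc, R_dist_eq; auto. }
  rewrite (P_split (E O) _ (HE O) Hall) in Hlim.
  rewrite (P_ext (fun w => E O w /\ (forall n, E n w)) (fun w => forall n, E n w)) in Hlim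
    by (intro w; split; [tauto | intro H; split; auto]).
  lra.
Qed.

Lemma P_null_union (E : nat -> Om -> Prop) : (forall n, Fm (E n)) -> (forall n, P (E n) = 0) ->
  P (fun w => exists n, E n w) = 0.
Proof.
  intros HE H0.
  set (F := fun n w => exists k, (k <= n)%nat /\ E k w).
  assert (HF : forall n, Fm (F n))
    by (intro n; apply meas_exn; intro k; apply meas_and; auto; apply meas_const).
  assert (HF0 : forall n, P (F n) = 0).
  { induction n.
    - rewrite (P_ext _ (E O)); auto. intro w; split.
      + intros [k [Hk Hw]]. replace k with O in Hw by lia; auto.
      + exists O; auto.
    - apply Rle_antisym; [|apply P_nonneg; auto].
      rewrite (P_ext _ (fun w => F n w \/ E (S n) w)).
      + pose proof (P_union_le (F n) (E (S n)) (HF n) (HE (S n))). rewrite IHn, H0 in H; lra.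
      + intro w; split.
        * intros [k [Hk Hw]]. destruct (Nat.eq_dec k (S n)); [subst; auto|].
          left; exists k; split; auto; lia.
        * intros [[k [Hk Hw]]|Hw]; [exists k | exists (S n)]; split; auto. }
  pose proof (P_inc F HF (fun n w '(ex_intro _ k (conj Hk Hw)) =>
                 ex_intro _ k (conj (le_S _ _ Hk) Hw))) as Hc.
  rewrite (P_ext (fun w => exists n, F n w) (fun w => exists n, E n w)) in Hc.
  - apply (UL_sequence _ _ _ Hc). intros eps Heps; exists O; intros; rewrite HF0, R_dist_eq; auto.
  - intro w; split; [intros [n [k [_ Hk]]]; eauto | intros [n Hn]; exists n, n; auto].
Qed.

End Probability.

(** ** Countable additivity over an enumerated index set *)

Lemma least_ex (Q : nat -> Prop) : (exists k, Q k) -> exists k, Q k /\ forall j, (j < k)%nat -> ~ Q j.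
Proof.
  intros [k Hk]. revert Hk; induction k as [k IH] using (well_founded_induction Nat.lt_wf_0).
  intro Hk. destruct (classic (exists j, (j < k)%nat /\ Q j)) as [[j [Hj Hq]]|Hn].
  - apply (IH j); auto.
  - exists k; split; auto. intros j Hj Hq; apply Hn; eauto.
Qed.

Lemma list_bound {T} (L : list T) (Q : nat -> T -> Prop) : (forall t, In t L -> exists k, Q k t) ->
  exists N, forall t, In t L -> exists k, (k <= N)%nat /\ Q k t.
Proof.
  induction L as [|a L IH]; intro H; [exists O; simpl; tauto|].
  destruct IH as [N HN]; [intros; apply H; right; auto|].
  destruct (H a) as [k Hk]; [left; auto|]. exists (Nat.max N k). intros t [<-|Ht].
  - exists k; split; auto; lia.
  - destruct (HN t Ht) as [k' [Hk' Hq]]; exists k'; split; auto; lia.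
Qed.

Lemma cv_le_bound (s : nat -> R) l M : Un_cv s l -> (forall n, s n <= M) -> l <= M.
Proof.
  intros H Hb. apply Rnot_lt_le; intro Hc. destruct (H (l - M)) as [N HN]; [lra|].
  specialize (HN N (le_n _)). specialize (Hb N). unfold R_dist in HN.
  apply Rabs_def2 in HN. lra.
Qed.

Section Enumerations.
Context {I : Type} (c : nat -> I).

Definition first_occ (k : nat) : Prop := forall j, (j < k)%nat -> c j <> c k.

Fixpoint first_values (N : nat) : list I :=
  match N with
  | O => c O :: nil
  | S N' => if excluded_middle_informative (first_occ (S N')) then c (S N') :: first_values N'
            else first_values N'
  end.

Lemma first_values_In N i : In i (first_values N) <-> exists k, (k <= N)%nat /\ first_occ k /\ c k = i.
Proof.
  induction N as [|N IH]; simpl.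
  - split.
    + intros [<-|[]]. exists O; repeat split; auto. intros j Hj; lia.
    + intros [k [Hk [_ <-]]]. left; f_equal; lia.
  - destruct excluded_middle_informative as [Hf|Hf]; simpl; rewrite IH; split.
    + intros [<-|[k [Hk H]]]; [exists (S N); auto | exists k; split; auto].
    + intros [k [Hk H]]. destruct (Nat.eq_dec k (S N)); [subst; left; tauto|].
      right; exists k; split; auto; lia.
    + intros [k [Hk H]]. exists k; split; auto.
    + intros [k [Hk H]]. destruct (Nat.eq_dec k (S N)); [subst; tauto|].
      exists k; split; auto; lia.
Qed.

Lemma first_values_NoDup N : NoDup (first_values N).
Proof.
  induction N; simpl; [constructor; [simpl; tauto | constructor]|].
  destruct excluded_middle_informative as [Hf|Hf]; auto. constructor; auto.
  rewrite first_values_In. intros [k [Hk [_ Hc]]]. apply (Hf k); auto. lia.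
Qed.

Lemma first_occ_exists i : (exists k, c k = i) -> exists k, first_occ k /\ c k = i.
Proof.
  intro H. destruct (least_ex (fun k => c k = i) H) as [k [Hk Hl]].
  exists k; split; auto. intros j Hj Hc. apply (Hl j Hj). congruence.
Qed.

Lemma lsum_le_first_values (g : I -> R) L : (forall i, 0 <= g i) ->
  (forall i, ~ (exists k, c k = i) -> g i = 0) -> NoDup L ->
  exists N, lsum g L <= lsum g (first_values N).
Proof.
  intros Hg0 Hout HL.
  rewrite (lsum_split g (fun i => exists k, c k = i) L).
  rewrite (lsum_zero g (cfilter (fun t => ~ _) L)), Rplus_0_r.
  2:{ intros t Ht; rewrite cfilter_In in Ht. apply Hout; tauto. }
  destruct (list_bound (cfilter (fun i => exists k, c k = i) L)
                       (fun k i => first_occ k /\ c k = i)) as [N HN].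
  { intros t Ht. rewrite cfilter_In in Ht. apply first_occ_exists; tauto. }
  exists N. apply lsum_incl; auto; [apply cfilter_NoDup; auto|].
  intros t Ht. apply first_values_In. destruct (HN t Ht) as [k [Hk [H1 H2]]]; eauto.
Qed.

Lemma P_countable_union {X mu x0} (Z : @BRW_realization X mu x0) (E : I -> rOm Z -> Prop) :
  (forall i, rF Z (E i)) -> (forall i i' w, E i w -> E i' w -> i = i') ->
  rP Z (fun w => exists k, E (c k) w) = sumR (fun i => ind (exists k, c k = i) * rP Z (E i)).
Proof.
  intros HE Hd.
  set (g := fun i => ind (exists k, c k = i) * rP Z (E i)).
  assert (Hg0 : forall i, 0 <= g i).
  { intro i; unfold g. pose proof (ind_01 (exists k, c k = i)).
    pose proof (P_nonneg Z (E i) (HE i)). nra. }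
  (* the events [E (c k)] with [k] a first occurrence are pairwise disjoint *)
  set (D := fun k w => E (c k) w /\ first_occ k).
  assert (HD : forall k, rF Z (D k)) by (intro k; apply meas_and; auto; apply meas_const).
  assert (HDd : forall n m w, n <> m -> D n w -> D m w -> False).
  { intros n m w Hnm [H1 H2] [H3 H4]. pose proof (Hd _ _ _ H1 H3) as Hc.
    destruct (Nat.lt_total n m) as [Hl|[Hl|Hl]]; [apply (H4 n Hl)| |apply (H2 m Hl)]; auto. }
  pose proof (P_sigma Z D HD HDd) as Hs.
  rewrite (P_ext Z _ (fun w => exists k, E (c k) w)) in Hs.
  2:{ intro w; split; [intros [k [Hk _]]; eauto|].
      intros [k Hk]. destruct (first_occ_exists (c k)) as [j [Hj Hcj]]; eauto.
      exists j; split; auto. congruence. }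
  assert (Hpart : forall N, sum_f_R0 (fun k => rP Z (D k)) N = lsum g (first_values N)).
  { assert (HPD : forall k, rP Z (D k) =
                            if excluded_middle_informative (first_occ k) then g (c k) else 0).
    { intro k. destruct excluded_middle_informative as [Hf|Hf].
      - unfold g; rewrite ind_true by eauto. rewrite Rmult_1_l. apply P_ext; intro w; unfold D; tauto.
      - rewrite <- (P_empty Z). apply P_ext; intro w; unfold D; tauto. }
    induction N; simpl.
    - rewrite HPD. destruct excluded_middle_informative as [Hf|Hf]; [lra|].
      exfalso; apply Hf; intros j Hj; lia.
    - rewrite IHN, HPD. destruct excluded_middle_informative; simpl; lra. }
  assert (Hgrow : Un_growing (fun N => sum_f_R0 (fun k => rP Z (D k)) N)).
  { intro N; simpl. pose proof (P_nonneg Z (D (S N)) (HD _)). lra. }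
  assert (Hb : forall L, NoDup L -> lsum g L <= rP Z (fun w => exists k, E (c k) w)).
  { intros L HL. destruct (lsum_le_first_values g L Hg0) as [N HN]; auto.
    - intros i Hi. unfold g. rewrite ind_false; auto; lra.
    - rewrite <- Hpart in HN. pose proof (growing_ineq _ _ Hgrow Hs N). lra. }
  assert (Hsg : summable g) by (eapply summable_intro; eauto).
  apply Rle_antisym.
  - apply (cv_le_bound _ _ _ Hs). intro N; rewrite Hpart.
    apply sumR_ub; auto. apply first_values_NoDup.
  - apply sumR_least; auto.
Qed.
End Enumerations.

(** ** Countability of the state space

    Fix an enumeration [e] of [X].  Quantifiers over [X] then preserve events, and
    finitely supported configurations are enumerated through Cantor's coding of lists. *)

Fixpoint decode_len (len : nat) (k : nat) : list nat :=
  match len with O => nil | S m => let (a, b) := Cantor.of_nat k in a :: decode_len m b end.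

Definition decode (k : nat) : list nat := let (len, c) := Cantor.of_nat k in decode_len len c.

Lemma decode_surj l : exists k, decode k = l.
Proof.
  assert (H : forall l, exists c, decode_len (length l) c = l).
  { clear l; intro l; induction l as [|a l [c Hc]]; [exists O; auto|].
    exists (Cantor.to_nat (a, c)). cbn [length decode_len].
    rewrite Cantor.cancel_of_to. congruence. }
  destruct (H l) as [c Hc]. exists (Cantor.to_nat (length l, c)). unfold decode.
  rewrite Cantor.cancel_of_to; auto.
Qed.

Section CountableSpace.
Context {X : Type} (e : nat -> X) (He : forall y, exists n, e n = y).

(** An enumeration of the finitely supported configurations (with repetitions). *)
Definition conf (k : nat) : X -> nat := cfg (map e (decode k)).

Lemma conf_range h : (exists k, conf k = h) <-> fin_supp h.
Proof.
  split; [intros [k <-]; apply fin_cfg|]. intro Hf.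
  destruct (fin_exists_list h Hf) as [l Hl].
  assert (Hm : exists ln, map e ln = l).
  { clear Hl. induction l as [|a l [lm Hlm]]; [exists nil; auto|].
    destruct (He a) as [n Hn]. exists (n :: lm); simpl; congruence. }
  destruct Hm as [lm Hlm]. destruct (decode_surj lm) as [k Hk].
  exists k; unfold conf; congruence.
Qed.

(** Finite support, expressed through countably many conditions. *)
Lemma fin_supp_iff (h : X -> nat) : fin_supp h <->
  exists N, forall j, h (e j) <> 0%nat -> exists i, (i <= N)%nat /\ e i = e j.
Proof.
  split.
  - intros [l Hl]. destruct (list_bound l (fun k y => e k = y)) as [N HN]; [intros; apply He|].
    exists N. intros j Hj. apply HN, Hl, Hj.
  - intros [N HN]. exists (map e (seq 0 (S N))). intros y Hy. destruct (He y) as [j <-].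
    destruct (HN j Hy) as [i [Hi Hei]]. rewrite <- Hei. apply in_map, in_seq. lia.
Qed.

Context {mu : X -> (X -> nat) -> R} {x0 : X} (Z : BRW_realization mu x0).

Notation Om := (rOm Z).
Notation Fm := (rF Z).
Notation P := (rP Z).
Notation eta := (reta Z).

Lemma meas_allX (E : X -> Om -> Prop) : (forall y, Fm (E y)) -> Fm (fun w => forall y, E y w).
Proof.
  intro H. eapply meas_ext; [apply (meas_alln Z (fun n => E (e n))); auto|].
  intro w; split; auto. intros Ha y. destruct (He y) as [n <-]; auto.
Qed.

Lemma meas_exX (E : X -> Om -> Prop) : (forall y, Fm (E y)) -> Fm (fun w => exists y, E y w).
Proof.
  intro H. eapply meas_ext; [apply (meas_exn Z (fun n => E (e n))); auto|].
  intro w; split; [intros [n Hn]; eauto|]. intros [y Hy]. destruct (He y) as [n <-]; eauto.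
Qed.

Lemma meas_eta_fun n h : Fm (fun w => eta n w = h).
Proof.
  eapply meas_ext; [apply (meas_allX (fun y w => eta n w y = h y)); intro; apply eta_meas|].
  intro w; split; [intro; apply functional_extensionality; auto | intros ->; auto].
Qed.

Lemma meas_vanish B n : Fm (fun w => vanish B (eta n w)).
Proof. apply meas_allX; intro y. apply meas_imp; [apply meas_const | apply eta_meas]. Qed.

Lemma meas_fin n : Fm (fun w => fin_supp (eta n w)).
Proof.
  eapply meas_ext; [|intro w; symmetry; apply fin_supp_iff].
  apply meas_exn; intro N. apply meas_alln; intro j.
  apply meas_imp; [apply meas_not, eta_meas | apply meas_const].
Qed.

Definition hist (n : nat) (hs : nat -> X -> nat) (w : Om) : Prop :=
  forall k, (k <= n)%nat -> eta k w = hs k.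

Lemma meas_hist n hs : Fm (hist n hs).
Proof. apply meas_alln; intro k. apply meas_imp; [apply meas_const | apply meas_eta_fun]. Qed.

Lemma P_config_union (E : (X -> nat) -> Om -> Prop) :
  (forall h, Fm (E h)) -> (forall h h' w, E h w -> E h' w -> h = h') ->
  P (fun w => exists h, fin_supp h /\ E h w) = sumR (fun h => ind (fin_supp h) * P (E h)).
Proof.
  intros HE Hd.
  rewrite (P_ext Z _ (fun w => exists k, E (conf k) w)).
  2:{ intro w; split.
      - intros [h [Hf Hh]]. apply conf_range in Hf. destruct Hf as [k <-]; eauto.
      - intros [k Hk]. exists (conf k); split; auto. apply conf_range; eauto. }
  rewrite (P_countable_union conf Z E HE Hd). f_equal.
  apply functional_extensionality; intro h. f_equal. apply ind_ext, conf_range.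
Qed.

End CountableSpace.

(** ** Conditioning on the next generation *)
Section NextGeneration.
Context {X : Type} (mu : X -> (X -> nat) -> R) (Hmu : is_BRW mu).
Context (e : nat -> X) (He : forall y, exists n, e n = y).
Context {x0 : X} (Z : BRW_realization mu x0).

Notation Om := (rOm Z).
Notation Fm := (rF Z).
Notation P := (rP Z).
Notation eta := (reta Z).

Definition upd (hs : nat -> X -> nat) (m : nat) (h : X -> nat) (k : nat) : X -> nat :=
  if Nat.eq_dec k m then h else hs k.

Lemma hist_upd n hs h w :
  hist Z (S n) (upd hs (S n) h) w <-> hist Z n hs w /\ eta (S n) w = h.
Proof.
  unfold hist, upd. split.
  - intro H. split.
    + intros k Hk. specialize (H k ltac:(lia)). destruct Nat.eq_dec; [lia|auto].
    + specialize (H (S n) ltac:(lia)). destruct Nat.eq_dec; [auto|lia].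
  - intros [H1 H2] k Hk. destruct Nat.eq_dec; [subst; auto | apply H1; lia].
Qed.

Lemma markov_step n hs l h : cfg l = hs n ->
  P (hist Z (S n) (upd hs (S n) h)) = P (hist Z n hs) * offl mu l h.
Proof. intro Hl. rewrite (P_ext Z _ _ (hist_upd n hs h)). apply eta_markov; auto. Qed.

Lemma next_generation_fin n hs l : cfg l = hs n ->
  P (fun w => hist Z n hs w /\ ~ fin_supp (eta (S n) w)) = 0.
Proof.
  intro Hl.
  assert (Hh := meas_hist e He Z n hs). assert (Hf := meas_fin e He Z (S n)).
  assert (Hfin : P (fun w => hist Z n hs w /\ fin_supp (eta (S n) w)) = P (hist Z n hs)).
  { rewrite (P_ext Z _ (fun w => exists h, fin_supp h /\ hist Z (S n) (upd hs (S n) h) w)).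
    2:{ intro w; split.
        - intros [H1 H2]. exists (eta (S n) w); split; auto. apply hist_upd; auto.
        - intros [h [H1 H2]]. apply hist_upd in H2. destruct H2 as [H2 <-]; auto. }
    rewrite (P_config_union e He Z (fun h => hist Z (S n) (upd hs (S n) h))); auto.
    2:{ intro; apply (meas_hist e He). }
    2:{ intros h h' w H1 H2. apply hist_upd in H1, H2. destruct H1, H2; congruence. }
    transitivity (sumR (fun h => P (hist Z n hs) * offl mu l h)).
    - f_equal. apply functional_extensionality; intro h. rewrite (markov_step n hs l h Hl).
      destruct (classic (fin_supp h)) as [Hfh|Hfh]; [rewrite ind_true; auto; lra|].
      rewrite ind_false; auto.
      destruct (Req_dec (offl mu l h) 0) as [E0|E0]; [rewrite E0; lra|].
      exfalso; apply Hfh, (offl_fin mu Hmu l h E0).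
    - rewrite sumR_scal, offl_mass; auto; [lra | apply P_nonneg; auto |].
      intro; apply offl_nonneg; auto. }
  pose proof (P_split Z (hist Z n hs) _ Hh Hf). lra.
Qed.

Lemma P_next_generation n hs l E : cfg l = hs n -> Fm E ->
  P (fun w => hist Z n hs w /\ E w) =
  sumR (fun h => ind (fin_supp h) * P (fun w => hist Z (S n) (upd hs (S n) h) w /\ E w)).
Proof.
  intros Hl HE.
  assert (Hh := meas_hist e He Z n hs). assert (Hf := meas_fin e He Z (S n)).
  assert (HhE : Fm (fun w => hist Z n hs w /\ E w)) by (apply meas_and; auto).
  rewrite (P_split Z _ _ HhE Hf).
  assert (Hnull : P (fun w => (hist Z n hs w /\ E w) /\ ~ fin_supp (eta (S n) w)) = 0).
  { apply (P_null_sub Z _ (fun w => hist Z n hs w /\ ~ fin_supp (eta (S n) w))).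
    - apply meas_and; auto; apply meas_not; auto.
    - apply meas_and; auto; apply meas_not; auto.
    - apply (next_generation_fin n hs l Hl).
    - intros w [[H1 _] H2]; auto. }
  rewrite Hnull, Rplus_0_r.
  rewrite (P_ext Z _ (fun w => exists h, fin_supp h /\
                                     (hist Z (S n) (upd hs (S n) h) w /\ E w))).
  2:{ intro w; split.
      - intros [[H1 H2] H3]. exists (eta (S n) w). rewrite hist_upd; auto.
      - intros [h [H1 [H2 H3]]]. apply hist_upd in H2. destruct H2 as [H2 <-]. auto. }
  apply (P_config_union e He); auto.
  - intro h; apply meas_and; auto. apply (meas_hist e He).
  - intros h h' w [H1 _] [H2 _]. apply hist_upd in H1, H2. destruct H1, H2; congruence.
Qed.

End NextGeneration.

(** ** The branching property for events of the trajectory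

    Events are described on trajectories [t : nat -> X -> nat] (generation [k] is [t k]),
    indexed by a time [n]: [T n t] typically speaks about generations after [n].
    [T] has the product form [tau] in a realization when, given any history up to
    time [n] whose generation [n] is listed by [l], the conditional probability of [T n]
    is [prod_(y in l) tau y]: the particles alive at time [n] act independently. *)
Section Branching.
Context {X : Type} (mu : X -> (X -> nat) -> R) (Hmu : is_BRW mu).
Context (e : nat -> X) (He : forall y, exists n, e n = y).

Definition traj {x0 : X} (Z : BRW_realization mu x0) (w : rOm Z) : nat -> X -> nat :=
  fun k => reta Z k w.

Definition product_form {x0 : X} (Z : BRW_realization mu x0)
  (T : nat -> (nat -> X -> nat) -> Prop) (tau : X -> R) : Prop :=
  forall n hs l, cfg l = hs n ->
    rP Z (fun w => hist Z n hs w /\ T n (traj Z w)) = rP Z (hist Z n hs) * lprod tau l.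

Lemma product_form_ext {x0} (Z : BRW_realization mu x0) T T' tau :
  (forall n t, T n t <-> T' n t) -> product_form Z T tau -> product_form Z T' tau.
Proof.
  intros Heq H n hs l Hl. rewrite <- (H n hs l Hl). apply P_ext; intro w. rewrite Heq; tauto.
Qed.

Definition cyl (Bs : nat -> X -> Prop) (M n : nat) (t : nat -> X -> nat) : Prop :=
  forall j, (1 <= j <= M)%nat -> vanish (Bs j) (t (n + j)%nat).

Lemma meas_cyl {x0} (Z : BRW_realization mu x0) Bs M n : rF Z (fun w => cyl Bs M n (traj Z w)).
Proof.
  apply meas_alln; intro j. apply meas_imp; [apply meas_const | apply (meas_vanish e He)].
Qed.

(** The probability of [cyl Bs M] computed generation by generation: [M] nested
    applications of [G], each restricted by the corresponding constraint. *)
Fixpoint Phi (Bs : nat -> X -> Prop) (M : nat) (tau : X -> R) : X -> R :=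
  match M with
  | O => tau
  | S M' => G mu (mask (Bs 1%nat) (Phi (fun j => Bs (S j)) M' tau))
  end.

Lemma Phi_unit Bs M tau : unit01 tau -> unit01 (Phi Bs M tau).
Proof.
  revert Bs; induction M; intros Bs Ht; simpl; auto. apply G_unit, mask_unit; auto.
Qed.

Lemma Phi_mono Bs M tau tau' : unit01 tau -> unit01 tau' -> (forall y, tau y <= tau' y) ->
  forall y, Phi Bs M tau y <= Phi Bs M tau' y.
Proof.
  revert Bs; induction M; intros Bs H1 H2 H3; simpl; auto.
  apply G_mono; auto using mask_unit, Phi_unit.
  intro y. apply mask_mono. intro z. split; [apply Phi_unit; auto | apply IHM; auto].
Qed.

Lemma Phi_all Bs tau tau' n : (forall y, Bs (S n) y) ->
  forall M, Phi Bs (S n + M) tau = Phi Bs (S n) tau'.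
Proof.
  revert Bs; induction n; intros Bs Hall M.
  - simpl. f_equal. apply functional_extensionality; intro y. unfold mask.
    destruct (excluded_middle_informative (Bs 1%nat y)) as [_|Hn]; [reflexivity|].
    exfalso; apply Hn, Hall.
  - change (Phi Bs (S (S n) + M) tau)
      with (G mu (mask (Bs 1%nat) (Phi (fun j => Bs (S j)) (S n + M) tau))).
    change (Phi Bs (S (S n)) tau')
      with (G mu (mask (Bs 1%nat) (Phi (fun j => Bs (S j)) (S n) tau'))).
    rewrite IHn; auto.
Qed.

Lemma cyl_first_level Bs M n (T : nat -> (nat -> X -> nat) -> Prop) t :
  cyl Bs (S M) n t /\ T (n + S M)%nat t <->
  vanish (Bs 1%nat) (t (S n)) /\ cyl (fun j => Bs (S j)) M (S n) t /\ T (S n + M)%nat t.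
Proof.
  replace (n + S M)%nat with (S n + M)%nat by lia. unfold cyl. split.
  - intros [H1 H2]. repeat split; auto.
    + specialize (H1 1%nat ltac:(lia)). rewrite Nat.add_1_r in H1; auto.
    + intros j Hj. specialize (H1 (S j) ltac:(lia)). rewrite Nat.add_succ_r in H1; auto.
  - intros [H1 [H2 H3]]. split; auto. intros [|j] Hj; [lia|].
    rewrite Nat.add_succ_r. destruct j as [|j]; [rewrite Nat.add_0_r; auto|].
    apply (H2 (S j)); lia.
Qed.

Section OneRealization.
Context {x0 : X} (Z : BRW_realization mu x0).

Lemma branching_step T tau Bs M n hs l h :
  product_form Z (fun n t => cyl (fun j => Bs (S j)) M n t /\ T (n + M)%nat t)
               (Phi (fun j => Bs (S j)) M tau) ->
  cfg l = hs n ->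
  ind (fin_supp h) * rP Z (fun w => hist Z (S n) (upd hs (S n) h) w /\
                                     (cyl Bs (S M) n (traj Z w) /\ T (n + S M)%nat (traj Z w)))
  = rP Z (hist Z n hs) * (offl mu l h * monom (mask (Bs 1%nat) (Phi (fun j => Bs (S j)) M tau)) h).
Proof.
  intros IH Hl. destruct (classic (fin_supp h)) as [Hfh|Hfh].
  2:{ rewrite ind_false by auto.
      destruct (Req_dec (offl mu l h) 0) as [E0|E0]; [rewrite E0; lra|].
      exfalso; apply Hfh, (offl_fin mu Hmu l h E0). }
  rewrite ind_true, monom_mask by auto.
  (* knowing generation [n+1], the first level of the cylinder is a condition on [h] *)
  rewrite (P_ext Z _ (fun w => hist Z (S n) (upd hs (S n) h) w /\
             vanish (Bs 1%nat) h /\ cyl (fun j => Bs (S j)) M (S n) (traj Z w) /\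
             T (S n + M)%nat (traj Z w))).
  2:{ intro w. pose proof (cyl_first_level Bs M n T (traj Z w)) as Hcut.
      change (traj Z w (S n)) with (reta Z (S n) w) in Hcut.
      split; intros [H1 H2]; destruct (proj1 (hist_upd mu Z n hs h w) H1) as [_ Hh];
        rewrite Hh in Hcut; tauto. }
  destruct (classic (vanish (Bs 1%nat) h)) as [Hv|Hv].
  - rewrite ind_true by auto.
    rewrite (P_ext Z _ (fun w => hist Z (S n) (upd hs (S n) h) w /\
               (fun n t => cyl (fun j => Bs (S j)) M n t /\ T (n + M)%nat t) (S n) (traj Z w)))
      by (intro w; tauto).
    rewrite (IH (S n) _ (listof h)), (markov_step mu Z n hs l h Hl).
    + unfold monom. lra.
    + unfold upd. destruct Nat.eq_dec; [apply cfg_listof; auto | lia].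
  - rewrite ind_false by auto.
    rewrite (P_ext Z _ (fun _ => False)), P_empty by (intro w; tauto). lra.
Qed.

(** The induction
    conditions on generation [n+1] and uses that the generating function of the
    offspring law of [l] is [prod_(a in l) G u a]. *)
Theorem branching_property T tau :
  (forall n, rF Z (fun w => T n (traj Z w))) -> unit01 tau -> product_form Z T tau ->
  forall M Bs, product_form Z (fun n t => cyl Bs M n t /\ T (n + M)%nat t) (Phi Bs M tau).
Proof.
  intros HT Htau Hbase M. induction M as [|M IH]; intros Bs n hs l Hl.
  { rewrite <- Hbase by auto. apply P_ext; intro w. rewrite Nat.add_0_r.
    unfold cyl. split; [tauto|]. intros [H1 H2]; repeat split; auto; intros; lia. }
  assert (Hu : unit01 (Phi (fun j => Bs (S j)) M tau)) by (apply Phi_unit; auto).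
  rewrite (P_next_generation mu Hmu e He Z n hs l); auto.
  2:{ apply meas_and; [apply meas_cyl | auto]. }
  erewrite (f_equal sumR);
    [|apply functional_extensionality; intro h; apply (branching_step T tau Bs M n hs l h (IH _) Hl)].
  rewrite sumR_scal.
  - simpl. f_equal. apply (proj2 (proj2 (offl_law mu Hmu l) _ (mask_unit _ _ Hu))).
  - apply P_nonneg, (meas_hist e He).
  - intro h. apply pgf_term_nonneg; auto using mask_unit. apply offl_law; auto.
Qed.

Lemma cyl_product_form Bs M : product_form Z (cyl Bs M) (Phi Bs M (fun _ => 1)).
Proof.
  apply (product_form_ext Z (fun n t => cyl Bs M n t /\ True)); [intros; tauto|].
  apply (branching_property (fun _ _ => True) (fun _ => 1)).
  - intro; apply meas_const.
  - intro; lra.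
  - intros n hs l Hl. rewrite lprod_one, Rmult_1_r. apply P_ext; intro; tauto.
Qed.

Lemma lprod_cv (f : nat -> X -> R) (g : X -> R) l :
  (forall y, Un_cv (fun M => f M y) (g y)) -> Un_cv (fun M => lprod (f M) l) (lprod g l).
Proof.
  intro H. induction l; simpl; [intros eps Heps; exists O; intros; rewrite R_dist_eq; auto|].
  apply CV_mult; auto.
Qed.

Lemma product_form_lim (T : nat -> nat -> (nat -> X -> nat) -> Prop) T_inf tau tau_inf :
  (forall M, product_form Z (T M) (tau M)) -> (forall y, Un_cv (fun M => tau M y) (tau_inf y)) ->
  (forall n hs, Un_cv (fun M => rP Z (fun w => hist Z n hs w /\ T M n (traj Z w)))
                      (rP Z (fun w => hist Z n hs w /\ T_inf n (traj Z w)))) ->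
  product_form Z T_inf tau_inf.
Proof.
  intros Hpf Hcv HP n hs l Hl. apply (UL_sequence _ _ _ (HP n hs)).
  eapply Un_cv_ext; [intro M; symmetry; apply (Hpf M n hs l Hl)|].
  apply CV_mult; [intros eps Heps; exists O; intros; rewrite R_dist_eq; auto|].
  apply lprod_cv; auto.
Qed.

Lemma product_form_dec (T : nat -> nat -> (nat -> X -> nat) -> Prop) tau tau_inf :
  (forall M n, rF Z (fun w => T M n (traj Z w))) -> (forall M n t, T (S M) n t -> T M n t) ->
  (forall M, product_form Z (T M) (tau M)) -> (forall y, Un_cv (fun M => tau M y) (tau_inf y)) ->
  product_form Z (fun n t => forall M, T M n t) tau_inf.
Proof.
  intros HT Hdec Hpf Hcv. apply (product_form_lim T _ tau); auto. intros n hs.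
  rewrite (P_ext Z _ (fun w => forall M, hist Z n hs w /\ T M n (traj Z w)))
    by (intro w; split; [intros [H1 H2] M; auto | intro H; split; [apply (H O)|]; intro; apply H]).
  apply P_dec; [intro M; apply meas_and; auto; apply (meas_hist e He)|].
  intros M w [H1 H2]; split; auto.
Qed.

Lemma product_form_inc (T : nat -> nat -> (nat -> X -> nat) -> Prop) tau tau_inf :
  (forall M n, rF Z (fun w => T M n (traj Z w))) -> (forall M n t, T M n t -> T (S M) n t) ->
  (forall M, product_form Z (T M) (tau M)) -> (forall y, Un_cv (fun M => tau M y) (tau_inf y)) ->
  product_form Z (fun n t => exists M, T M n t) tau_inf.
Proof.
  intros HT Hinc Hpf Hcv. apply (product_form_lim T _ tau); auto. intros n hs.
  rewrite (P_ext Z _ (fun w => exists M, hist Z n hs w /\ T M n (traj Z w)))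
    by (intro w; split; [intros [H1 [M H2]]; eauto | intros [M [H1 H2]]; split; eauto]).
  apply P_inc; [intro M; apply meas_and; auto; apply (meas_hist e He)|].
  intros M w [H1 H2]; split; auto.
Qed.

End OneRealization.
End Branching.

(** ** Extinction probabilities as iterates of the generating function *)
Section Family.
Context {X : Type} (mu : X -> (X -> nat) -> R) (Hmu : is_BRW mu).
Context (e : nat -> X) (He : forall y, exists n, e n = y).
Context (Z : forall x : X, BRW_realization mu x).

Definition Px (x : X) (E : (nat -> X -> nat) -> Prop) : R :=
  rP (Z x) (fun w => E (traj mu (Z x) w)).

Definition meas_path (T : nat -> (nat -> X -> nat) -> Prop) : Prop :=
  forall x n, rF (Z x) (fun w => T n (traj mu (Z x) w)).

(** The initial configuration: one particle at [x] (only generation 0 is used). *)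
Definition start_hist (x : X) : nat -> X -> nat := fun _ => cfg (x :: nil).

Lemma P_start_hist x : rP (Z x) (hist (Z x) 0 (start_hist x)) = 1.
Proof.
  rewrite <- (eta_init (Z x)). apply P_ext. intro w; unfold hist, start_hist; split.
  - intro H; apply H; lia.
  - intros H k Hk; replace k with O by lia; auto.
Qed.

Lemma product_form_start x T tau : rF (Z x) (fun w => T 0%nat (traj mu (Z x) w)) ->
  product_form mu (Z x) T tau -> Px x (T 0%nat) = tau x.
Proof.
  intros HT Hpf. assert (Hh := meas_hist e He (Z x) 0 (start_hist x)).
  unfold Px. rewrite <- (P_and_sure (Z x) _ _ HT Hh (P_start_hist x)).
  rewrite (P_ext _ _ (fun w => hist (Z x) 0 (start_hist x) w /\ T 0%nat (traj mu (Z x) w)))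
    by (intro; tauto).
  rewrite (Hpf 0%nat (start_hist x) (x :: nil) eq_refl), P_start_hist. simpl; lra.
Qed.

Lemma family_dec (T : nat -> nat -> (nat -> X -> nat) -> Prop) T_inf :
  (forall M, meas_path (T M)) -> (forall M n t, T (S M) n t -> T M n t) ->
  (forall n t, T_inf n t <-> forall M, T M n t) ->
  (forall M x, product_form mu (Z x) (T M) (fun y => Px y (T M 0%nat))) ->
  forall x, product_form mu (Z x) T_inf (fun y => Px y (T_inf 0%nat)).
Proof.
  intros HT Hdec Heq Hpf x. apply (product_form_ext mu _ _ _ _ (fun n t => iff_sym (Heq n t))).
  apply (product_form_dec mu e He (Z x) T (fun M y => Px y (T M 0%nat))); auto.
  - intros M n; apply HT.
  - intro y. unfold Px. rewrite (P_ext _ _ (fun w => forall M, T M 0%nat (traj mu (Z y) w)))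
      by (intro; apply Heq).
    apply P_dec; [intro; apply HT | intros M w; apply Hdec].
Qed.

Lemma family_inc (T : nat -> nat -> (nat -> X -> nat) -> Prop) T_inf :
  (forall M, meas_path (T M)) -> (forall M n t, T M n t -> T (S M) n t) ->
  (forall n t, T_inf n t <-> exists M, T M n t) ->
  (forall M x, product_form mu (Z x) (T M) (fun y => Px y (T M 0%nat))) ->
  forall x, product_form mu (Z x) T_inf (fun y => Px y (T_inf 0%nat)).
Proof.
  intros HT Hinc Heq Hpf x. apply (product_form_ext mu _ _ _ _ (fun n t => iff_sym (Heq n t))).
  apply (product_form_inc mu e He (Z x) T (fun M y => Px y (T M 0%nat))); auto.
  - intros M n; apply HT.
  - intro y. unfold Px. rewrite (P_ext _ _ (fun w => exists M, T M 0%nat (traj mu (Z y) w)))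
      by (intro; apply Heq).
    apply P_inc; [intro; apply HT | intros M w; apply Hinc].
Qed.

Lemma meas_path_cyl Bs M : meas_path (cyl Bs M).
Proof. intros x n; apply (meas_cyl mu e He). Qed.

Lemma Px_cyl y Bs M : Px y (cyl Bs M 0%nat) = Phi mu Bs M (fun _ => 1) y.
Proof.
  apply product_form_start; [apply meas_path_cyl | apply (cyl_product_form mu Hmu e He)].
Qed.

Lemma cyl_family Bs M x : product_form mu (Z x) (cyl Bs M) (fun y => Px y (cyl Bs M 0%nat)).
Proof.
  replace (fun y => Px y (cyl Bs M 0%nat)) with (Phi mu Bs M (fun _ => 1))
    by (apply functional_extensionality; intro; rewrite Px_cyl; auto).
  apply (cyl_product_form mu Hmu e He).
Qed.

Definition ext_after (A : X -> Prop) (n : nat) (t : nat -> X -> nat) : Prop :=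
  forall k y, (n < k)%nat -> A y -> t k y = 0%nat.

(** Global extinction, viewed as a (time-independent) trajectory event. *)
Definition extinct (n : nat) (t : nat -> X -> nat) : Prop :=
  exists k, ext_after (fun _ => True) k t.

Lemma meas_path_ext_after A : meas_path (ext_after A).
Proof.
  intros x n. apply meas_alln; intro k. apply (meas_allX e He); intro y.
  apply meas_imp; [apply meas_const|]. apply meas_imp; [apply meas_const | apply eta_meas].
Qed.

Lemma meas_path_extinct : meas_path extinct.
Proof. intros x n; apply meas_exn; intro k; apply meas_path_ext_after. Qed.

Lemma ext_after_mono A n m t : (n <= m)%nat -> ext_after A n t -> ext_after A m t.
Proof. intros Hnm H k y Hk Hy; apply H; auto; lia. Qed.

(** [q_n(.,A)] has product form [q_0(.,A)]: extinction in [A] after time [n] requires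
    each particle alive at time [n] to have no descendant in [A]. *)
Lemma ext_after_product_form A x :
  product_form mu (Z x) (ext_after A) (fun y => qn (Z y) A 0%nat).
Proof.
  apply (family_dec (fun M => cyl (fun _ => A) M)).
  - intro; apply meas_path_cyl.
  - intros M n t H j Hj; apply H; lia.
  - intros n t. unfold ext_after, cyl, vanish. split.
    + intros H M j Hj y Hy. apply H; auto; lia.
    + intros H k y Hk Hy. specialize (H k (k - n)%nat ltac:(lia) y Hy).
      replace (n + (k - n))%nat with k in H by lia; auto.
  - intros; apply cyl_family.
Qed.

Lemma extinct_product_form x : product_form mu (Z x) extinct (fun y => qbar (Z y)).
Proof.
  (* extinction after [n + m], for fixed [m], is a limit of cylinders *)
  assert (Hm : forall m x, product_form mu (Z x) (fun n t => ext_after (fun _ => True) (n + m) t)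
                 (fun y => Px y (fun t => ext_after (fun _ => True) (0 + m) t))).
  { intro m. apply (family_dec (fun M => cyl (fun j _ => (m < j)%nat) M)).
    - intro; apply meas_path_cyl.
    - intros M n t H j Hj; apply H; lia.
    - intros n t. unfold ext_after, cyl, vanish. split.
      + intros H M j Hj y Hy. apply H; auto; lia.
      + intros H k y Hk _. specialize (H (k - n)%nat (k - n)%nat ltac:(lia) y ltac:(lia)).
        replace (n + (k - n))%nat with k in H by lia; auto.
    - intros; apply cyl_family. }
  apply (family_inc (fun m n t => ext_after (fun _ => True) (n + m) t)); auto.
  - intros m x' n; apply meas_path_ext_after.
  - intros m n t; apply ext_after_mono; lia.
  - intros n t; split.
    + intros [k Hk]. exists k. apply (ext_after_mono _ k); auto; lia.
    + intros [m Hm']. exists (n + m)%nat; auto.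
Qed.

(** With no cylinder constraint, [Phi no_constraint n] is the [n]-th iterate of [G]. *)
Definition no_constraint : nat -> X -> Prop := fun _ _ => False.

Lemma Px_iterate x T tau : meas_path T -> unit01 tau -> product_form mu (Z x) T tau ->
  forall n, Px x (T n) = Phi mu no_constraint n tau x.
Proof.
  intros HT Htau Hpf n.
  rewrite <- (product_form_start x (fun m t => cyl no_constraint n m t /\ T (m + n)%nat t)).
  - apply P_ext; intro w. unfold cyl, no_constraint, vanish. simpl. tauto.
  - apply meas_and; [apply meas_path_cyl | apply HT].
  - apply (branching_property mu Hmu e He); [intro; apply HT | auto | auto].
Qed.

Lemma qn_unit A : unit01 (fun y => qn (Z y) A 0%nat).
Proof. intro y; split; [apply P_nonneg | apply P_le1]; apply meas_path_ext_after. Qed.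

Lemma qbar_unit : unit01 (fun y => qbar (Z y)).
Proof. intro y; split; [apply P_nonneg | apply P_le1]; apply (meas_path_extinct y 0%nat). Qed.

Lemma q_le_qbar A : (forall y, qn (Z y) A 0%nat <= qbar (Z y)) -> forall x, q (Z x) A <= qbar (Z x).
Proof.
  intros H x.
  assert (Hn : forall n, qn (Z x) A n <= qbar (Z x)).
  { intro n. change (qn (Z x) A n) with (Px x (ext_after A n)).
    change (qbar (Z x)) with (Px x (extinct n)).
    rewrite (Px_iterate x _ _ (meas_path_ext_after A) (qn_unit A) (ext_after_product_form A x)).
    rewrite (Px_iterate x _ _ meas_path_extinct qbar_unit (extinct_product_form x)).
    apply Phi_mono; auto using qn_unit, qbar_unit. }
  apply (cv_le_bound (fun n => qn (Z x) A n)); auto.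
  apply P_inc; [intro; apply meas_path_ext_after|]. intros n w; apply ext_after_mono; lia.
Qed.

End Family.

(** ** Extinction versus survival *)
Section Survival.
Context {X : Type} (mu : X -> (X -> nat) -> R) (Hmu : is_BRW mu).
Context (e : nat -> X) (He : forall y, exists n, e n = y).
Context (Z : forall x : X, BRW_realization mu x).

Lemma meas_loc_ext x A : rF (Z x) (loc_ext (Z x) A).
Proof. apply meas_exn; intro n. apply (meas_path_ext_after mu e He Z A x n). Qed.

Lemma meas_glob_surv x : rF (Z x) (glob_surv (Z x)).
Proof.
  apply meas_alln; intro n. apply (meas_exX e He); intro y. apply meas_not, eta_meas.
Qed.

(** The empty population is absorbing: almost surely, a process that is not globally
    extinct has particles at every generation. *)
Lemma extinction_absorbing x :
  rP (Z x) (fun w => ~ loc_ext (Z x) (fun _ => True) w /\ ~ glob_surv (Z x) w) = 0.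
Proof.
  set (D := fun n w => (forall y, reta (Z x) n w y = 0%nat) /\ ~ loc_ext (Z x) (fun _ => True) w).
  assert (HD : forall n, rF (Z x) (D n)).
  { intro n; apply meas_and; [apply (meas_allX e He); intro; apply eta_meas|].
    apply meas_not, meas_loc_ext. }
  rewrite (P_ext _ _ (fun w => exists n, D n w)).
  2:{ intro w; unfold D, glob_surv; split.
      - intros [H1 H2]. apply not_all_ex_not in H2. destruct H2 as [n Hn]. exists n; split; auto.
        intro y; apply NNPP; intro; apply Hn; eauto.
      - intros [n [H1 H2]]. split; auto. intro Hs; destruct (Hs n) as [y Hy]; auto. }
  apply P_null_union; auto. intros [|m].
  - (* generation 0 is the single initial particle *)
    apply (P_null_sub _ _ (fun w => ~ hist (Z x) 0 (start_hist x) w)); auto.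
    + apply meas_not, (meas_hist e He).
    + rewrite P_compl, (P_start_hist mu Z); [lra | apply (meas_hist e He)].
    + intros w [H1 _] H3. specialize (H3 O (le_n _)). specialize (H1 x).
      rewrite H3 in H1. unfold start_hist in H1; simpl in H1.
      destruct excluded_middle_informative; [lia|auto].
  - (* an empty generation [m+1] forbids particles at all later generations *)
    set (Bs := fun j (_ : X) => (S m <= j)%nat).
    set (E := fun M w => cyl Bs (S m + M) 0 (traj mu (Z x) w)).
    assert (HE : forall M, rF (Z x) (E M)) by (intro; apply (meas_cyl mu e He)).
    assert (Hnull : rP (Z x) (fun w => E O w /\ ~ forall M, E M w) = 0).
    { apply P_dec_const; auto.
      - intros M w Hw j Hj; apply Hw; lia.
      - intro M. unfold E. change (Px mu Z x (cyl Bs (S m + M) 0) = Px mu Z x (cyl Bs (S m + 0) 0)).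
        rewrite !(Px_cyl mu Hmu e He Z), Nat.add_0_r.
        rewrite (Phi_all mu Bs (fun _ => 1) (fun _ => 1) m); auto. intro; unfold Bs; lia. }
    apply (P_null_sub _ _ (fun w => E O w /\ ~ forall M, E M w)); auto.
    { apply meas_and; auto. apply meas_not, meas_alln; auto. }
    intros w [H1 H2]. split.
    + intros j Hj y Hy. unfold Bs in Hy. replace j with (S m) by lia. apply H1.
    + intro H. apply H2. exists m. intros k y Hk _. specialize (H (k - S m)%nat k ltac:(lia) y).
      unfold Bs in H. simpl in H. apply H. lia.
Qed.

Lemma qbar_le_q A x : qbar (Z x) <= q (Z x) A.
Proof.
  apply P_mono; try apply meas_loc_ext.
  intros w [n Hn]; exists n; intros k y Hk _; apply Hn; auto.
Qed.

Lemma qn0_le_q A x : qn (Z x) A 0%nat <= q (Z x) A.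
Proof.
  apply P_mono; [apply (meas_path_ext_after mu e He Z A x 0%nat) | apply meas_loc_ext |].
  intros w Hw; exists O; auto.
Qed.

Lemma P_glob_surv x : rP (Z x) (glob_surv (Z x)) = 1 - qbar (Z x).
Proof.
  set (Ext := loc_ext (Z x) (fun _ => True)).
  assert (HExt : rF (Z x) Ext) by apply meas_loc_ext.
  assert (Hsurv := meas_glob_surv x).
  unfold qbar, q. fold Ext. rewrite <- P_compl by auto.
  rewrite (P_split (Z x) (fun w => ~ Ext w) _ (meas_not _ _ HExt) Hsurv).
  unfold Ext; rewrite (extinction_absorbing x), Rplus_0_r.
  apply P_ext; intro w; split; [|tauto]. intro Hs; split; auto.
  intros [n Hn]. destruct (Hs (S n)) as [y Hy]. apply Hy, Hn; auto.
Qed.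

Lemma q_decomposition A x :
  q (Z x) A = qbar (Z x) + rP (Z x) (fun w => loc_ext (Z x) A w /\ glob_surv (Z x) w).
Proof.
  set (LA := loc_ext (Z x) A). set (Ext := loc_ext (Z x) (fun _ => True)).
  assert (HLA : rF (Z x) LA) by apply meas_loc_ext.
  assert (HExt : rF (Z x) Ext) by apply meas_loc_ext.
  assert (Hsurv := meas_glob_surv x).
  assert (HLS : rF (Z x) (fun w => LA w /\ ~ glob_surv (Z x) w))
    by (apply meas_and; auto; apply meas_not; auto).
  unfold q at 1. fold LA. rewrite (P_split (Z x) LA _ HLA Hsurv).
  assert (rP (Z x) (fun w => LA w /\ ~ glob_surv (Z x) w) = qbar (Z x)); [|lra].
  rewrite (P_split (Z x) _ _ HLS HExt).
  rewrite (P_null_sub (Z x) (fun w => (LA w /\ ~ glob_surv (Z x) w) /\ ~ Ext w)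
             (fun w => ~ Ext w /\ ~ glob_surv (Z x) w)).
  - rewrite Rplus_0_r. apply P_ext; intro w. split; [tauto|]. intros [n Hn]. repeat split.
    + exists n; intros k y Hk _; apply Hn; auto.
    + intro Hs. destruct (Hs (S n)) as [y Hy]. apply Hy, Hn; auto.
    + exists n; auto.
  - apply meas_and; auto; apply meas_not; auto.
  - apply meas_and; apply meas_not; auto.
  - apply extinction_absorbing.
  - tauto.
Qed.

Lemma q_eq_qbar_iff_cond A x : q (Z x) A = qbar (Z x) <->
  qbar (Z x) = 1 \/ cond_prob (Z x) (fun w => ~ loc_ext (Z x) A w) (glob_surv (Z x)) = 1.
Proof.
  assert (HLA := meas_loc_ext x A). assert (Hsurv := meas_glob_surv x).
  assert (Hsplit := P_split (Z x) _ _ Hsurv HLA).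
  rewrite (P_ext _ (fun w => glob_surv (Z x) w /\ loc_ext (Z x) A w)
             (fun w => loc_ext (Z x) A w /\ glob_surv (Z x) w)) in Hsplit by (intro; tauto).
  rewrite (P_ext _ (fun w => glob_surv (Z x) w /\ ~ loc_ext (Z x) A w)
             (fun w => ~ loc_ext (Z x) A w /\ glob_surv (Z x) w)) in Hsplit by (intro; tauto).
  assert (H0 : 0 <= rP (Z x) (fun w => loc_ext (Z x) A w /\ glob_surv (Z x) w))
    by (apply P_nonneg, meas_and; auto).
  assert (H0' : 0 <= rP (Z x) (fun w => ~ loc_ext (Z x) A w /\ glob_surv (Z x) w))
    by (apply P_nonneg, meas_and; auto; apply meas_not; auto).
  rewrite q_decomposition, P_glob_surv in *. unfold cond_prob. rewrite P_glob_surv.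
  split.
  - intro Hq. destruct (Req_dec (qbar (Z x)) 1) as [H1|H1]; [left; auto | right].
    field_simplify_eq; lra.
  - intros [H1|H1]; [lra|].
    assert (Hpos : 1 - qbar (Z x) <> 0)
      by (intro Hz; unfold Rdiv in H1; rewrite Hz, Rinv_0 in H1; lra).
    apply (f_equal (fun r => r * (1 - qbar (Z x)))) in H1.
    unfold Rdiv in H1. rewrite Rmult_assoc, Rinv_l, Rmult_1_r in H1 by auto. lra.
Qed.

End Survival.

(** The theorem. *)
Theorem mainTheorem15 (X : Type)
  (HX : exists e : nat -> X, forall y, exists n, e n = y)
  (mu : X -> (X -> nat) -> R) (Hmu : is_BRW mu)
  (Z : forall x : X, BRW_realization mu x)
  (A : X -> Prop) (HA : exists a, A a) :
  ((forall x, q (Z x) A = qbar (Z x)) <-> (forall x, qn (Z x) A 0 <= qbar (Z x)))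
  /\
  ((forall x, q (Z x) A = qbar (Z x)) <->
   (forall x, qbar (Z x) = 1 \/
      cond_prob (Z x) (fun w => ~ loc_ext (Z x) A w) (glob_surv (Z x)) = 1)).
Proof.
  destruct HX as [e He]. split; split.
  - (* (1) -> (2): q_0(x,A) <= q(x,A) *)
    intros H x. rewrite <- H. apply (qn0_le_q mu e He Z).
  -
    intros H x. apply Rle_antisym.
    + apply (q_le_qbar mu Hmu e He Z A H).
    + apply (qbar_le_q mu e He Z).
  - (* (1) <-> (3) holds for each starting point *)
    intros H x. apply (q_eq_qbar_iff_cond mu Hmu e He Z); auto.
  - intros H x. apply (q_eq_qbar_iff_cond mu Hmu e He Z); auto.
Qed.
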